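(* Let $f'=(f'_n):B\to B$ be a strict $A_\infty$-isomorphism from Polishchuk's structure $(m_n)$ with $f'_1=\mathrm{id}_B$, $f'_2=f'_4=f'_5=\cdots=0$, such that the transferred structure $f'*m$ satisfies $(f'*m)_4=0$ and $(f'*m)_{2k+1}=0$ for all $k\ge0$. Then $m'_6-(f'*m)_6$ and $m'_8-(f'*m)_8$ are Hochschild coboundaries. Consequently the classes $[m'_6]\in HH^6_{(-4)}(B,B)$ and $[m'_8]\in HH^8_{(-6)}(B,B)$ do not depend on the choice of such an isomorphism.
   Context: $B$ is the graded $\mathbb C$-algebra with basis $\mathrm{id}_L,\mathrm{id}_{\mathcal O},\theta$ (degree $0$), $\eta,\xi,\xi_L$ (degree $1$) and only nonzero basis products $\mathrm{id}_L^2=\mathrm{id}_L$, $\mathrm{id}_{\mathcal O}^2=\mathrm{id}_{\mathcal O}$, $\mathrm{id}_L\xi_L=\xi_L\mathrm{id}_L=\xi_L$, $\mathrm{id}_{\mathcal O}\xi=\xi\mathrm{id}_{\mathcal O}=\xi$, $\mathrm{id}_L\eta=\eta\,\mathrm{id}_{\mathcal O}=\eta$, $\mathrm{id}_{\mathcal O}\theta=\theta\,\mathrm{id}_L=\theta$, $\theta\eta=\xi$, $\eta\theta=\xi_L$; $R=\langle\mathrm{id}_L,\mathrm{id}_{\mathcal O}\rangle$, $B_+=\langle\theta,\eta,\xi,\xi_L\rangle$; cochains are $R$-bimodule maps on $B_+^{\otimes_R n}$; Hochschild differential $\delta(\phi)(a_0,\dots,a_n)=a_0\phi(a_1,\dots,a_n)+\sum_{i=1}^n(-1)^i\phi(\dots,a_{i-1}a_i,\dots)+(-1)^{n+1}\phi(a_0,\dots,a_{n-1})a_n$.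 With $t=\operatorname{Im}\tau/\pi$, the Eisenstein-type numbers $g_{a,b}$ of the lattice $\mathbb Z+\tau\mathbb Z$ (defined by $f_{m,n}=(\pi/\operatorname{Im}\tau)^m\sum_{\omega\ne0}\bar\omega^m\omega^{-n}e^{-\pi|\omega|^2/\operatorname{Im}\tau}$, $g_{a,b}=\sum_{k\ge0}k!(\binom ak+\binom bk)f_{a+b-k,k+1}$ for $a\not\equiv b$ mod 2, $0$ otherwise) and $M(a,b,c,d)=(-1)^{\binom{a+b+c+d+1}{2}}\frac{t^{a+b+c+d+1}}{a!b!c!d!}g_{a+c,b+d}$, Polishchuk's structure $(m_n)$ has $m_1=0$, $m_2$ the product, and for $n\ge3$ its only nonzero values on length-$n$ basis words are $m_n(\xi^a\theta\xi_L^b\eta\xi^c\theta\xi_L^d)=M(a,b,c,d)\theta$, $m_n(\xi_L^a\eta\xi^b\theta\xi_L^c\eta\xi^d)=M(a,b,c,d)\eta$, $m_n(\xi^a\theta\xi_L^b\eta\xi^c\theta\xi_L^d\eta\xi^e)=M(a+e+1,b,c,d)\mathrm{id}_{\mathcal O}$, $m_n(\xi_L^a\eta\xi^b\theta\xi_L^c\eta\xi^d\theta\xi_L^e)=M(a+e+1,b,c,d)\mathrm{id}_L$ (words written without $\otimes$; odd $m_n$ vanish). $(m'_n)$ is the structure obtained from $(m_n)$ by the specific strict isomorphism $f=(\mathrm{id},0,f_3,0,\dots)$ with $f_3=M(1,0,0,0)[([\eta\xi\xi]^*-[\xi_L\xi_L\eta]^*-[\xi_L\eta\xi]^* )\otimes\eta+([\theta\xi_L\xi_L]^*-[\xi\xi\theta]^*-[\xi\theta\xi_L]^*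 )\otimes\theta+([\xi\theta\eta]^*+[\theta\xi_L\eta]^*-[\theta\eta\xi]^* )\otimes\mathrm{id}_{\mathcal O}+([\xi_L\eta\theta]^*+[\eta\xi\theta]^*-[\eta\theta\xi_L]^* )\otimes\mathrm{id}_L]$ ($[u]^*\otimes y$ sends the basis word $u$ to $y$ and all other basis words to $0$); it has $m'_4=0$, all odd $m'_k=0$, and $m'_6,m'_8$ Hochschild cocycles. For a strict isomorphism $g$, $g*m$ denotes the unique $A_\infty$-structure making $g:(B,m)\to(B,g*m)$ an $A_\infty$-morphism. *)

From Stdlib Require Import Reals List Arith ZArith.
Import ListNotations.
Open Scope R_scope.

Record Cx := mkC { Cre : R; Cim : R }.
Definition C0 : Cx := mkC 0 0.
Definition C1 : Cx := mkC 1 0.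
Definition RC (x : R) : Cx := mkC x 0.
Definition Cadd (z w : Cx) : Cx := mkC (Cre z + Cre w) (Cim z + Cim w).
Definition Cmul (z w : Cx) : Cx :=
  mkC (Cre z * Cre w - Cim z * Cim w) (Cre z * Cim w + Cim z * Cre w).
Definition Copp (z : Cx) : Cx := mkC (- Cre z) (- Cim z).
Definition Csub (z w : Cx) : Cx := Cadd z (Copp w).
Definition Cconj (z : Cx) : Cx := mkC (Cre z) (- Cim z).
Definition Cnorm2 (z : Cx) : R := Cre z * Cre z + Cim z * Cim z.
Definition Cinv (z : Cx) : Cx := mkC (Cre z / Cnorm2 z) (- Cim z / Cnorm2 z).
Fixpoint Cpow (z : Cx) (n : nat) : Cx :=
  match n with O => C1 | S k => Cmul z (Cpow z k) end.
Definition Csum (l : list Cx) : Cx := fold_right Cadd C0 l.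
Definition Csign (k : nat) : Cx := if Nat.even k then C1 else Copp C1.

Fixpoint binom (n k : nat) : nat :=
  match n, k with
  | _, O => 1
  | O, S _ => 0
  | S n', S k' => (binom n' k' + binom n' k)%nat
  end.

(* Eisenstein-type numbers of the lattice Z + tau Z, tau = tr + i ti, ti > 0 *)

Definition lat_term (tr ti : R) (m n : nat) (p q : R) : Cx :=
  let w := mkC (p + q * tr) (q * ti) in
  Cmul (Cmul (Cpow (Cconj w) m) (Cpow (Cinv w) n))
       (RC (exp (- PI * Cnorm2 w / ti))).

(* partial sum over the square |p|,|q| <= N, omitting w = 0 *)
Definition lat_partial (tr ti : R) (m n N : nat) : Cx :=
  Csum (flat_map (fun i => map (fun j =>
          if (Nat.eqb i N && Nat.eqb j N)%bool then C0
          else lat_term tr ti m n (INR i - INR N) (INR j - INR N))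
        (seq 0 (2 * N + 1))) (seq 0 (2 * N + 1))).

Definition is_lattice_sum (tr ti : R) (m n : nat) (z : Cx) : Prop :=
  Un_cv (fun N => Cre (lat_partial tr ti m n N)) (Cre z) /\
  Un_cv (fun N => Cim (lat_partial tr ti m n N)) (Cim z).

Section Constants.
(* ti = Im tau; S m n = the lattice sum above *)
Variables (ti : R) (S : nat -> nat -> Cx).

Definition f_mn (m n : nat) : Cx := Cmul (RC ((PI / ti) ^ m)) (S m n).

Definition g_ab (a b : nat) : Cx :=
  if Nat.even (a + b) then C0 else
  Csum (map (fun k => Cmul (RC (INR (fact k) * INR (binom a k + binom b k)))
                          (f_mn (a + b - k) (k + 1)))
            (seq 0 (a + b + 1))).
(* (terms with k > a + b vanish since both binomials vanish) *)

Definition tpar : R := ti / PI.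

Definition Mc (a b c d : nat) : Cx :=
  let s := (a + b + c + d)%nat in
  Cmul (Csign (binom (s + 1) 2))
    (Cmul (RC (tpar ^ (s + 1) / INR (fact a * fact b * fact c * fact d)))
          (g_ab (a + c) (b + d))).
End Constants.

Inductive pl := Th | Et | Xi | XiL.   (* basis of B_+ : theta, eta, xi, xi_L *)
Inductive bb := IdL | IdO | P (x : pl).
Inductive obj := oL | oO.

Definition pl_eqb (x y : pl) : bool :=
  match x, y with
  | Th, Th | Et, Et | Xi, Xi | XiL, XiL => true | _, _ => false end.
Definition bb_eqb (x y : bb) : bool :=
  match x, y with
  | IdL, IdL | IdO, IdO => true | P a, P b => pl_eqb a b | _, _ => false end.
Fixpoint word_eqb (u v : list pl) : bool :=
  match u, v with
  | [], [] => true
  | x :: u', y :: v' => (pl_eqb x y && word_eqb u' v')%bool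
  | _, _ => false end.
Definition obj_eqb (x y : obj) : bool :=
  match x, y with oL, oL | oO, oO => true | _, _ => false end.

(* e_left * b * e_right = b *)
Definition lft (b : bb) : obj :=
  match b with IdL => oL | IdO => oO | P Th => oO | P Et => oL
  | P Xi => oO | P XiL => oL end.
Definition rgt (b : bb) : obj :=
  match b with IdL => oL | IdO => oO | P Th => oL | P Et => oO
  | P Xi => oO | P XiL => oL end.

Definition dg (x : pl) : nat := match x with Th => 0 | _ => 1 end.
Definition degb (b : bb) : Z := match b with P x => Z.of_nat (dg x) | _ => 0%Z end.
Definition degsum (w : list pl) : nat := fold_right (fun x s => (dg x + s)%nat) 0%nat w.

Definition bmul (x y : bb) : option bb :=
  match x, y with
  | IdL, IdL => Some IdL | IdO, IdO => Some IdO
  | IdL, P XiL => Some (P XiL) | P XiL, IdL => Some (P XiL)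
  | IdO, P Xi => Some (P Xi) | P Xi, IdO => Some (P Xi)
  | IdL, P Et => Some (P Et) | P Et, IdO => Some (P Et)
  | IdO, P Th => Some (P Th) | P Th, IdL => Some (P Th)
  | P Th, P Et => Some (P Xi) | P Et, P Th => Some (P XiL)
  | _, _ => None end.

Definition bbs : list bb := [IdL; IdO; P Th; P Et; P Xi; P XiL].
Definition pls : list pl := [Th; Et; Xi; XiL].

Definition vec := bb -> Cx.
Definition vzero : vec := fun _ => C0.
Definition vadd (v w : vec) : vec := fun c => Cadd (v c) (w c).
Definition vscale (z : Cx) (v : vec) : vec := fun c => Cmul z (v c).
Definition vsum (l : list vec) : vec := fold_right vadd vzero l.
Definition bv (b : bb) : vec := fun c => if bb_eqb b c then C1 else C0.
Definition inj (x : pl) : vec := bv (P x).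

Definition vmul (v w : vec) : vec := fun c =>
  Csum (flat_map (fun a => map (fun b =>
     match bmul a b with
     | Some d => if bb_eqb d c then Cmul (v a) (w b) else C0
     | None => C0 end) bbs) bbs).

(* Cochains: R-bimodule maps on B_+^{(x)_R n}.  B_+^{(x)_R n} has as basis
   the composable words of basis letters of B_+; a cochain is given by its
   values on basis words (values on non-composable words are irrelevant). *)
Fixpoint composable (w : list pl) : bool :=
  match w with
  | x :: ((y :: _) as w') => (obj_eqb (rgt (P x)) (lft (P y)) && composable w')%bool
  | _ => true end.

Fixpoint words (k : nat) : list (list pl) :=
  match k with
  | O => [[]]
  | S k' => flat_map (fun w => map (fun x => x :: w) pls) (words k') end.

Definition cochain := list pl -> vec.

Fixpoint coef (vs : list vec) (w : list pl) : Cx :=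
  match vs, w with
  | [], [] => C1
  | v :: vs', x :: w' => Cmul (v (P x)) (coef vs' w')
  | _, _ => C0 end.

(* multilinear evaluation of a cochain on elements of B; components along
   R = <id_L, id_O> are killed (normalized/strictly unital cochains) *)
Definition eval (phi : cochain) (vs : list vec) : vec := fun c =>
  Csum (map (fun w => Cmul (coef vs w) (phi w c))
            (filter composable (words (length vs)))).

Definition bimod (phi : cochain) : Prop :=
  forall (x : pl) (w : list pl) (c : bb), composable (x :: w) = true ->
    phi (x :: w) c <> C0 ->
    lft c = lft (P x) /\ rgt c = rgt (P (last w x)).

Definition homog (phi : cochain) (d : Z) : Prop :=
  forall (w : list pl) (c : bb), composable w = true -> phi w c <> C0 ->
    degb c = (Z.of_nat (degsum w) + d)%Z.

Definition hoch (phi : cochain) (w : list pl) : vec :=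
  let n := (length w - 1)%nat in
  let iw := map inj w in
  vsum ([vmul (nth 0 iw vzero) (eval phi (tl iw))] ++
        map (fun i => vscale (Csign i)
               (eval phi (firstn (i - 1) iw ++
                          [vmul (nth (i - 1) iw vzero) (nth i iw vzero)] ++
                          skipn (i + 1) iw)))
            (seq 1 n) ++
        [vscale (Csign (n + 1)) (vmul (eval phi (removelast iw)) (last iw vzero))]).

Definition coboundary (n : nat) (chi : cochain) : Prop :=
  exists psi : cochain, bimod psi /\ homog psi (2 - Z.of_nat n)%Z /\
    forall w c, composable w = true -> length w = n -> chi w c = hoch psi w c.

(* Minimal strictly unital A-infinity structures with m_1 = 0 and m_2 the
   product are encoded by m : nat -> cochain (only m n, n >= 3, is used).
   Strict A-infinity morphisms f with f_1 = id are encoded by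
   f : nat -> cochain (only f n, n >= 2, is used). *)
Definition opM (m : nat -> cochain) (n : nat) (vs : list vec) : vec :=
  match n with
  | O | 1 => vzero
  | 2 => vmul (nth 0 vs vzero) (nth 1 vs vzero)
  | _ => eval (m n) vs end.
Definition opF (f : nat -> cochain) (n : nat) (vs : list vec) : vec :=
  match n with
  | 1 => nth 0 vs vzero
  | _ => eval (f n) vs end.

Fixpoint comps_aux (fuel n : nat) : list (list nat) :=
  match fuel with
  | O => if Nat.eqb n 0 then [[]] else []
  | S fu => if Nat.eqb n 0 then [[]] else
      flat_map (fun i => map (cons i) (comps_aux fu (n - i))) (seq 1 n) end.
Definition comps (n : nat) : list (list nat) := comps_aux n n.

Fixpoint blocks (comp : list nat) (w : list pl) : list (list pl) :=
  match comp with [] => [] | i :: c => firstn i w :: blocks c (skipn i w) end.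

(* sign exponent of  m'_q (f_{i_1} (x) ... (x) f_{i_q})  applied to the basis
   word w: Keller's  sum_j (q-j)(i_j-1)  plus the Koszul sign of passing
   f_{i_j} (degree 1 - i_j) over the preceding inputs; D = degree so far *)
Fixpoint mor_exp (comp : list nat) (w : list pl) (D : nat) : nat :=
  match comp with
  | [] => 0
  | i :: c => (length c * (i - 1) + (i - 1) * D +
               mor_exp c (skipn i w) (D + degsum (firstn i w)))%nat end.

(* sum_{r+s+t=n} (-1)^{r+st} f_{r+1+t}(1^r (x) m_s (x) 1^t) on the word w
   (with the Koszul sign of m_s, degree 2 - s, passing the first r inputs) *)
Definition mor_lhs (m f : nat -> cochain) (w : list pl) : vec :=
  let n := length w in
  vsum (flat_map (fun s => map (fun r =>
          let t := (n - r - s)%nat in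
          vscale (Csign (r + s * t + s * degsum (firstn r w)))
            (opF f (r + 1 + t)
               (map inj (firstn r w) ++
                [opM m s (map inj (firstn s (skipn r w)))] ++
                map inj (skipn (r + s) w))))
        (seq 0 (n - s + 1))) (seq 1 n)).

Definition mor_rhs (f m' : nat -> cochain) (w : list pl) : vec :=
  vsum (map (fun comp =>
          vscale (Csign (mor_exp comp w 0))
            (opM m' (length comp)
               (map (fun ij => opF f (fst ij) (map inj (snd ij)))
                    (combine comp (blocks comp w)))))
        (comps (length w))).

(* f : (B, m) -> (B, m') is an A-infinity morphism (Keller's sign conventions;
   tested on basis words of B_+^{(x)_R n}, n >= 1) *)
Definition is_morphism (m f m' : nat -> cochain) : Prop :=
  forall (w : list pl) (c : bb), composable w = true -> (1 <= length w)%nat ->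
    mor_lhs m f w c = mor_rhs f m' w c.

Definition strict3 (f3 : cochain) : nat -> cochain :=
  fun n => if Nat.eqb n 3 then f3 else (fun _ => vzero).

Definition rep (x : pl) (k : nat) : list pl := repeat x k.
Definition word1 a b c d :=
  rep Xi a ++ [Th] ++ rep XiL b ++ [Et] ++ rep Xi c ++ [Th] ++ rep XiL d.
Definition word2 a b c d :=
  rep XiL a ++ [Et] ++ rep Xi b ++ [Th] ++ rep XiL c ++ [Et] ++ rep Xi d.
Definition word3 a b c d e :=
  rep Xi a ++ [Th] ++ rep XiL b ++ [Et] ++ rep Xi c ++ [Th] ++ rep XiL d
  ++ [Et] ++ rep Xi e.
Definition word4 a b c d e :=
  rep XiL a ++ [Et] ++ rep Xi b ++ [Th] ++ rep XiL c ++ [Et] ++ rep Xi d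
  ++ [Th] ++ rep XiL e.

Definition tuples4 (n : nat) : list (nat * nat * nat * nat) :=
  flat_map (fun a => flat_map (fun b => flat_map (fun c => map (fun d => (a, b, c, d))
    (seq 0 (n + 1))) (seq 0 (n + 1))) (seq 0 (n + 1))) (seq 0 (n + 1)).
Definition tuples5 (n : nat) : list (nat * nat * nat * nat * nat) :=
  flat_map (fun t => map (fun e => (t, e)) (seq 0 (n + 1))) (tuples4 n).

Definition polishchuk (ti : R) (S : nat -> nat -> Cx) : nat -> cochain :=
  fun n w =>
  if Nat.ltb n 3 then vzero else
  vsum (map (fun '(a, b, c, d) =>
          if Nat.eqb (a + b + c + d + 3) n then
            vadd (if word_eqb w (word1 a b c d)
                  then vscale (Mc ti S a b c d) (bv (P Th)) else vzero)
                 (if word_eqb w (word2 a b c d)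
                  then vscale (Mc ti S a b c d) (bv (P Et)) else vzero)
          else vzero) (tuples4 n)
      ++ map (fun '(a, b, c, d, e) =>
          if Nat.eqb (a + b + c + d + e + 4) n then
            vadd (if word_eqb w (word3 a b c d e)
                  then vscale (Mc ti S (a + e + 1) b c d) (bv IdO) else vzero)
                 (if word_eqb w (word4 a b c d e)
                  then vscale (Mc ti S (a + e + 1) b c d) (bv IdL) else vzero)
          else vzero) (tuples5 n)).

Definition f3ctx (ti : R) (S : nat -> nat -> Cx) : cochain := fun w =>
  vscale (Mc ti S 1 0 0 0)
  (match w with
   | [Et; Xi; Xi] => bv (P Et)
   | [XiL; XiL; Et] => vscale (Copp C1) (bv (P Et))
   | [XiL; Et; Xi] => vscale (Copp C1) (bv (P Et))
   | [Th; XiL; XiL] => bv (P Th)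
   | [Xi; Xi; Th] => vscale (Copp C1) (bv (P Th))
   | [Xi; Th; XiL] => vscale (Copp C1) (bv (P Th))
   | [Xi; Th; Et] => bv IdO
   | [Th; XiL; Et] => bv IdO
   | [Th; Et; Xi] => vscale (Copp C1) (bv IdO)
   | [XiL; Et; Th] => bv IdL
   | [Et; Xi; Th] => bv IdL
   | [Et; Th; XiL] => vscale (Copp C1) (bv IdL)
   | _ => vzero end).

From Stdlib Require Import Reals List Arith ZArith Ring_polynom QArith Qreals Lia Lra.
From Stdlib Require Import FunctionalExtensionality Classical.
(* imported last: Defs' complex constants C0, C1 shadow homonyms from Reals *)
Import ListNotations.
Open Scope R_scope.

(* Everything in the statement becomes finite once the
   scalars are treated symbolically.  In arity <= 8 Polishchuk's m_n only
   involves t = Im tau / pi and the six numbers g_{0,1}, g_{0,3}, g_{1,2},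
   g_{0,5}, g_{1,4}, g_{2,3}, and the unknown f'_3, being an R-bimodule map of
   internal degree -2, has only 14 possibly nonzero coefficients.  We work with
   polynomials over Q in these 21 atoms (Stdlib's Ring_polynom), interpreted in
   the complex numbers by a ring morphism.

   1. Evaluation of cochains, the Hochschild differential and both sides of the
      A-infinity morphism equation are mirrored on symbolic vectors, with
      denotation lemmas.
   2. The morphism equation is triangular: it determines (f*m)_n from m, f and
      the (f*m)_k, k < n.  Solving it arity by arity on tries indexed by the
      composable words computes f*m symbolically (transfer_table_ok).
   3. (f'*m)_4 = 0 forces f'_3 = f_3 + lambda k1 + mu k2 for two free scalars
      lambda, mu: every coefficient of the difference is an explicit rational
      combination of values of (f'*m)_4 (f3_normal_form).
   4. For this family, m'_n - (f'*m)_n = delta psi_n (n = 6, 8) for explicit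
      cochains psi_n with polynomial coefficients in t, g_{0,1}, lambda, mu.
   All finite identities of steps 3 and 4 are decided by vm_compute. *)

Lemma Cx_ext a b c d : a = c -> b = d -> mkC a b = mkC c d.
Proof. intros; subst; reflexivity. Qed.

Lemma Cx_ring : ring_theory C0 C1 Cadd Cmul Csub Copp (@eq Cx).
Proof.
  constructor; intros;
  repeat match goal with z : Cx |- _ => destruct z end;
  unfold C0, C1, Cadd, Cmul, Csub, Copp; simpl; apply Cx_ext; simpl; ring.
Qed.
Add Ring CxRing : Cx_ring.

Lemma Csum_app l1 l2 : Csum (l1 ++ l2) = Cadd (Csum l1) (Csum l2).
Proof. induction l1; simpl. ring. rewrite IHl1; ring. Qed.

Lemma Csum_map_add {A} (F G : A -> Cx) l :
  Csum (map (fun x => Cadd (F x) (G x)) l) = Cadd (Csum (map F l)) (Csum (map G l)).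
Proof. induction l; simpl. ring. rewrite IHl; ring. Qed.

Lemma Csub_eq0 a b : Csub a b = C0 -> a = b.
Proof. intro H. transitivity (Cadd (Csub a b) b). ring. rewrite H. ring. Qed.

Lemma RC_add x y : RC (x + y) = Cadd (RC x) (RC y).
Proof. unfold RC, Cadd; simpl; apply Cx_ext; ring. Qed.
Lemma RC_mul x y : RC (x * y) = Cmul (RC x) (RC y).
Proof. unfold RC, Cmul; simpl; apply Cx_ext; ring. Qed.
Lemma RC_opp x : RC (- x) = Copp (RC x).
Proof. unfold RC, Copp; simpl; apply Cx_ext; ring. Qed.

(* Rational coefficients, kept reduced so that symbolic computations stay small;
   Qphi embeds them into Cx as a ring morphism. *)
Definition Qphi (q : Q) : Cx := RC (Q2R q).
Definition qadd x y := Qred (Qplus x y).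
Definition qmul x y := Qred (Qmult x y).
Definition qsub x y := Qred (Qminus x y).

Lemma Qphi_morph : ring_morph C0 C1 Cadd Cmul Csub Copp (@eq Cx)
  0%Q 1%Q qadd qmul qsub Qopp Qeq_bool Qphi.
Proof.
  constructor; intros; unfold Qphi, qadd, qmul, qsub.
  - unfold RC, C0, Q2R; simpl; apply Cx_ext; field.
  - unfold RC, C1, Q2R; simpl; apply Cx_ext; field.
  - rewrite (Qeq_eqR _ _ (Qred_correct _)), Q2R_plus, RC_add; reflexivity.
  - rewrite (Qeq_eqR _ _ (Qred_correct _)), Q2R_minus. unfold Rminus, Csub.
    rewrite RC_add, RC_opp; reflexivity.
  - rewrite (Qeq_eqR _ _ (Qred_correct _)), Q2R_mult, RC_mul; reflexivity.
  - rewrite Q2R_opp, RC_opp; reflexivity.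
  - apply Qeq_bool_eq in H. rewrite (Qeq_eqR _ _ H); reflexivity.
Qed.

Definition Cx_ARth := Rth_ARth (Eqsth Cx) (Eq_ext Cadd Cmul Copp) Cx_ring.

(* Symbolic scalars: normalized polynomials over Q in numbered atoms; the
   atom i denotes the i-th entry of an environment (sden). *)
Definition sc := Pol Q.
Definition szero : sc := Pc 0%Q.
Definition sone : sc := Pc 1%Q.
Definition sconst (q : Q) : sc := Pc q.
Definition sadd (p q : sc) : sc := Padd 0%Q qadd Qeq_bool p q.
Definition smul (p q : sc) : sc := Pmul 0%Q 1%Q qadd qmul Qeq_bool p q.
Definition ssub (p q : sc) : sc := Psub 0%Q qadd qsub Qopp Qeq_bool p q.
Definition satom (i : positive) : sc := mk_X 0%Q 1%Q i.
Definition sden (env : list Cx) (p : sc) : Cx := Pphi C0 Cadd Cmul Qphi env p.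
Definition seqb (p q : sc) : bool := Peq Qeq_bool p q.
Definition siszero (p : sc) : bool :=
  match p with Pc c => Qeq_bool c 0 | _ => false end.
Definition ssign (k : nat) : sc := if Nat.even k then sone else sconst (-1)%Q.

Section ScalarDenotation.
Variable env : list Cx.

Lemma sden_add p q : sden env (sadd p q) = Cadd (sden env p) (sden env q).
Proof. exact (Padd_ok (Eqsth Cx) (Eq_ext Cadd Cmul Copp) Cx_ARth Qphi_morph q p env). Qed.
Lemma sden_mul p q : sden env (smul p q) = Cmul (sden env p) (sden env q).
Proof. exact (Pmul_ok (Eqsth Cx) (Eq_ext Cadd Cmul Copp) Cx_ARth Qphi_morph p q env). Qed.
Lemma sden_sub p q : sden env (ssub p q) = Csub (sden env p) (sden env q).
Proof. exact (Psub_ok (Eqsth Cx) (Eq_ext Cadd Cmul Copp) Cx_ARth Qphi_morph q p env). Qed.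
Lemma sden_atom i : sden env (satom i) = BinList.nth C0 i env.
Proof.
  symmetry; exact (mkX_ok (Eqsth Cx) (Eq_ext Cadd Cmul Copp) Cx_ARth Qphi_morph i env).
Qed.
Lemma sden_const q : sden env (sconst q) = Qphi q.
Proof. reflexivity. Qed.
Lemma sden_zero : sden env szero = C0.
Proof. unfold sden, szero; simpl. unfold Qphi, RC, C0, Q2R; simpl; apply Cx_ext; field. Qed.
Lemma sden_one : sden env sone = C1.
Proof. unfold sden, sone; simpl. unfold Qphi, RC, C1, Q2R; simpl; apply Cx_ext; field. Qed.
Lemma sden_minus_one : sden env (sconst (-1)%Q) = Copp C1.
Proof. rewrite sden_const. unfold Qphi, RC, Copp, C1, Q2R; simpl; apply Cx_ext; field. Qed.
Lemma sden_sign k : sden env (ssign k) = Csign k.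
Proof. unfold ssign, Csign. destruct (Nat.even k). apply sden_one. apply sden_minus_one. Qed.

Lemma sden_eqb p q : seqb p q = true -> sden env p = sden env q.
Proof. intro H. exact (Peq_ok (Eqsth Cx) (Eq_ext Cadd Cmul Copp) Qphi_morph p q H env). Qed.
Lemma sden_iszero p : siszero p = true -> sden env p = C0.
Proof.
  destruct p; simpl; try discriminate. intro H. apply Qeq_bool_eq in H.
  unfold sden; simpl. unfold Qphi. rewrite (Qeq_eqR _ _ H).
  unfold RC, C0, Q2R; simpl; apply Cx_ext; field.
Qed.
End ScalarDenotation.

Record sv := SV { sIdL : sc; sIdO : sc; sTh : sc; sEt : sc; sXi : sc; sXiL : sc }.
Definition sget (v : sv) (c : bb) : sc :=
  match c with IdL => sIdL v | IdO => sIdO v | P Th => sTh v | P Et => sEt v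
  | P Xi => sXi v | P XiL => sXiL v end.
Definition smk (f : bb -> sc) : sv :=
  SV (f IdL) (f IdO) (f (P Th)) (f (P Et)) (f (P Xi)) (f (P XiL)).
Lemma sget_mk f c : sget (smk f) c = f c.
Proof. destruct c as [| |[]]; reflexivity. Qed.

Definition svzero : sv := smk (fun _ => szero).
Definition svadd (v w : sv) : sv := smk (fun c => sadd (sget v c) (sget w c)).
Definition svsub (v w : sv) : sv := smk (fun c => ssub (sget v c) (sget w c)).
Definition svscale (p : sc) (v : sv) : sv := smk (fun c => smul p (sget v c)).
Definition svsum (l : list sv) : sv := fold_right svadd svzero l.
Definition sbv (b : bb) : sv := smk (fun c => if bb_eqb b c then sone else szero).
Definition sinj (x : pl) : sv := sbv (P x).
(* the product of B, read off the multiplication table bmul *)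
Definition svmul (v w : sv) : sv :=
  let g := sget v in let h := sget w in
  SV (smul (g IdL) (h IdL)) (smul (g IdO) (h IdO))
     (sadd (smul (g IdO) (h (P Th))) (smul (g (P Th)) (h IdL)))
     (sadd (smul (g IdL) (h (P Et))) (smul (g (P Et)) (h IdO)))
     (sadd (sadd (smul (g IdO) (h (P Xi))) (smul (g (P Xi)) (h IdO)))
           (smul (g (P Th)) (h (P Et))))
     (sadd (sadd (smul (g IdL) (h (P XiL))) (smul (g (P XiL)) (h IdL)))
           (smul (g (P Et)) (h (P Th)))).

Lemma vsum_pt l c : vsum l c = Csum (map (fun v => v c) l).
Proof. induction l; simpl. reflexivity. unfold vadd. rewrite IHl. reflexivity. Qed.

Section VectorDenotation.
Variable env : list Cx.
Definition vden (v : sv) : vec := fun c => sden env (sget v c).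

Lemma vden_zero : vden svzero = vzero.
Proof. extensionality c. unfold vden, svzero. rewrite sget_mk, sden_zero; reflexivity. Qed.
Lemma vden_add v w : vden (svadd v w) = vadd (vden v) (vden w).
Proof. extensionality c. unfold vden, svadd, vadd. rewrite sget_mk, sden_add; reflexivity. Qed.
Lemma vden_sub v w c : vden (svsub v w) c = Csub (vden v c) (vden w c).
Proof. unfold vden, svsub. rewrite sget_mk, sden_sub; reflexivity. Qed.
Lemma vden_scale p v : vden (svscale p v) = vscale (sden env p) (vden v).
Proof. extensionality c. unfold vden, svscale, vscale. rewrite sget_mk, sden_mul; reflexivity. Qed.
Lemma vden_sum l : vden (svsum l) = vsum (map vden l).
Proof. induction l; simpl. apply vden_zero. rewrite vden_add, IHl; reflexivity. Qed.
Lemma vden_sum_pt l c : vden (svsum l) c = Csum (map (fun v => vden v c) l).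
Proof. rewrite vden_sum, vsum_pt, map_map. reflexivity. Qed.
Lemma vden_bv b : vden (sbv b) = bv b.
Proof.
  extensionality c. unfold vden, sbv, bv. rewrite sget_mk.
  destruct (bb_eqb b c). apply sden_one. apply sden_zero.
Qed.
Lemma vden_mul v w : vden (svmul v w) = vmul (vden v) (vden w).
Proof.
  extensionality c. unfold vmul.
  destruct c as [| |[]]; unfold vden, svmul; simpl sget; rewrite ?sden_add, ?sden_mul;
  cbn [Csum flat_map map bbs bmul bb_eqb pl_eqb app fold_right sget]; ring.
Qed.
Lemma vden_nth vs i : nth i (map vden vs) vzero = vden (nth i vs svzero).
Proof. rewrite <- vden_zero, map_nth; reflexivity. Qed.
Lemma vden_map_sinj w : map vden (map sinj w) = map inj w.
Proof. rewrite map_map. apply map_ext. intro; apply vden_bv. Qed.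

Lemma vden_sum_filter {A} (F : A -> sv) (G : A -> vec) (p : A -> bool) l :
  (forall x, p x = true -> vden (F x) = G x) -> (forall x, p x = false -> G x = vzero) ->
  vden (svsum (map F (filter p l))) = vsum (map G l).
Proof.
  intros H1 H2. induction l as [|x l IH]; simpl. apply vden_zero.
  destruct (p x) eqn:E; simpl; rewrite <- IH.
  - rewrite vden_add, H1; auto.
  - rewrite H2 by auto. extensionality c. unfold vadd, vzero. ring.
Qed.
End VectorDenotation.

Definition eval_all (k : list pl -> vec) (vs : list vec) (c : bb) : Cx :=
  Csum (map (fun w => Cmul (coef vs w) (k w c)) (words (length vs))).

Lemma eval_as_all phi vs c :
  eval phi vs c = eval_all (fun w => if composable w then phi w else vzero) vs c.
Proof.
  unfold eval, eval_all. induction (words (length vs)) as [|w ws IH]; simpl. reflexivity.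
  destruct (composable w); simpl; rewrite IH. reflexivity. unfold vzero; ring.
Qed.

Lemma eval_all_nil k c : eval_all k [] c = k [] c.
Proof. unfold eval_all; simpl. ring. Qed.

Lemma eval_all_cons k v vs c :
  eval_all k (v :: vs) c =
  Csum (map (fun x => Cmul (v (P x)) (eval_all (fun w => k (x :: w)) vs c)) pls).
Proof.
  unfold eval_all. cbn [length words]. generalize (words (length vs)) as ws.
  induction ws as [|w ws IH]. simpl; ring.
  cbn [flat_map]. rewrite map_app, Csum_app, IH. cbn [pls map coef].
  unfold Csum; cbn [fold_right]. ring.
Qed.

Lemma eval_all_basis k w c : eval_all k (map inj w) c = k w c.
Proof.
  revert k; induction w as [|x w IH]; intro k. apply eval_all_nil.
  simpl map. rewrite eval_all_cons. simpl. rewrite !IH.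
  unfold inj, bv. destruct x; simpl; ring.
Qed.

Lemma eval_basis phi w c : composable w = true -> eval phi (map inj w) c = phi w c.
Proof. intro H. rewrite eval_as_all, eval_all_basis, H. reflexivity. Qed.

Lemma eval_zero_cochain vs c : eval (fun _ => vzero) vs c = C0.
Proof.
  unfold eval. induction (filter composable (words (length vs))); simpl. reflexivity.
  rewrite IHl. unfold vzero; ring.
Qed.

Fixpoint seval_all (k : list pl -> sv) (vs : list sv) : sv :=
  match vs with
  | [] => k []
  | v :: vs' => svsum (map (fun x => let a := sget v (P x) in
        if siszero a then svzero else svscale a (seval_all (fun w => k (x :: w)) vs')) pls)
  end.

Lemma seval_all_ok env vs : forall k kr,
  (forall w, length w = length vs -> vden env (k w) = kr w) ->
  forall c, vden env (seval_all k vs) c = eval_all kr (map (vden env) vs) c.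
Proof.
  induction vs as [|v vs IH]; intros k kr H c.
  - simpl. rewrite eval_all_nil, H; reflexivity.
  - simpl map. rewrite eval_all_cons. cbn [seval_all]. rewrite vden_sum.
    assert (Hx : forall x, vden env (let a := sget v (P x) in
        if siszero a then svzero else svscale a (seval_all (fun w => k (x :: w)) vs)) c
        = Cmul (vden env v (P x)) (eval_all (fun w => kr (x :: w)) (map (vden env) vs) c)).
    { intro x. cbv zeta. destruct (siszero (sget v (P x))) eqn:E.
      - rewrite vden_zero. change (vden env v (P x)) with (sden env (sget v (P x))).
        rewrite (sden_iszero env _ E). unfold vzero; ring.
      - rewrite vden_scale. unfold vscale. rewrite (IH _ (fun w => kr (x :: w))). reflexivity.
        intros w Hw. apply H. simpl; rewrite Hw; reflexivity. }
    unfold pls. cbn [map vsum fold_right]. unfold vadd. rewrite !Hx.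
    unfold vzero, Csum. cbn [map fold_right]. ring.
Qed.

Definition seval (sphi : list pl -> sv) (vs : list sv) : sv :=
  seval_all (fun w => if composable w then sphi w else svzero) vs.

Lemma seval_ok env sphi phi vs :
  (forall w, composable w = true -> length w = length vs -> vden env (sphi w) = phi w) ->
  vden env (seval sphi vs) = eval phi (map (vden env) vs).
Proof.
  intros H. extensionality c. rewrite eval_as_all. unfold seval. apply seval_all_ok.
  intros w Hw. destruct (composable w) eqn:E. apply H; auto. apply vden_zero.
Qed.

Definition sopM (sm : nat -> list pl -> sv) (n : nat) (vs : list sv) : sv :=
  match n with O | 1%nat => svzero | 2%nat => svmul (nth 0 vs svzero) (nth 1 vs svzero)
  | _ => seval (sm n) vs end.
Definition sopF (sf : nat -> list pl -> sv) (n : nat) (vs : list sv) : sv :=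
  match n with 1%nat => nth 0 vs svzero | _ => seval (sf n) vs end.

Lemma sopM_ok env sm m n vs :
  (forall w, (3 <= n)%nat -> composable w = true -> length w = length vs ->
     vden env (sm n w) = m n w) ->
  vden env (sopM sm n vs) = opM m n (map (vden env) vs).
Proof.
  intros H. destruct n as [|[|[|n]]].
  - apply vden_zero.
  - apply vden_zero.
  - simpl. rewrite vden_mul, !vden_nth; reflexivity.
  - apply seval_ok. intros; apply H; auto; lia.
Qed.

Lemma sopF_ok env sf f n vs :
  (forall w, n <> 1%nat -> composable w = true -> length w = length vs ->
     vden env (sf n w) = f n w) ->
  vden env (sopF sf n vs) = opF f n (map (vden env) vs).
Proof.
  intros H. destruct n as [|[|n]].
  - apply seval_ok; intros; apply H; auto.
  - simpl. rewrite vden_nth; reflexivity.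
  - apply seval_ok; intros; apply H; auto.
Qed.

Lemma map_flat_map {A B C} (h : B -> C) (g : A -> list B) l :
  map h (flat_map g l) = flat_map (fun x => map h (g x)) l.
Proof. induction l; simpl. reflexivity. rewrite map_app, IHl; reflexivity. Qed.
Lemma flat_map_ext_in {A B} (g g' : A -> list B) l :
  (forall x, In x l -> g x = g' x) -> flat_map g l = flat_map g' l.
Proof. induction l; simpl; intros H. reflexivity. rewrite H, IHl; auto. Qed.

Definition smor_lhs (sm sf : nat -> list pl -> sv) (w : list pl) : sv :=
  let n := length w in
  svsum (flat_map (fun s => map (fun r =>
          let t := (n - r - s)%nat in
          svscale (ssign (r + s * t + s * degsum (firstn r w)))
            (sopF sf (r + 1 + t)
               (map sinj (firstn r w) ++
                [sopM sm s (map sinj (firstn s (skipn r w)))] ++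
                map sinj (skipn (r + s) w))))
        (seq 0 (n - s + 1))) (seq 1 n)).

Lemma smor_lhs_ok env sm sf m f w :
  (forall q u, (3 <= q)%nat -> (q <= length w)%nat -> composable u = true -> length u = q ->
      vden env (sm q u) = m q u) ->
  (forall q u, q <> 1%nat -> composable u = true -> length u = q -> vden env (sf q u) = f q u) ->
  forall c, vden env (smor_lhs sm sf w) c = mor_lhs m f w c.
Proof.
  intros Hm Hf c. unfold smor_lhs, mor_lhs. rewrite vden_sum_pt, vsum_pt, !map_flat_map.
  f_equal. apply flat_map_ext_in. intros s Hs. rewrite !map_map. apply map_ext_in.
  intros r Hr. apply in_seq in Hs. apply in_seq in Hr.
  rewrite vden_scale, sden_sign. unfold vscale. f_equal.
  rewrite sopF_ok with (f := f).
  - rewrite !map_app, !vden_map_sinj. simpl. rewrite sopM_ok with (m := m).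
    + rewrite vden_map_sinj. reflexivity.
    + intros u H3 Hu Hl. apply Hm; auto.
      * lia.
      * rewrite Hl, length_map, length_firstn, length_skipn. lia.
  - intros u H1 Hu Hl. apply Hf; auto.
    rewrite Hl, !length_app, !length_map, length_firstn, length_skipn. simpl. lia.
Qed.

Fixpoint sumn (l : list nat) : nat := match l with [] => 0 | x :: l => x + sumn l end.

Lemma blocks_len comp : forall w, sumn comp = length w ->
  forall ij, In ij (combine comp (blocks comp w)) -> length (snd ij) = fst ij.
Proof.
  induction comp as [|i c IH]; intros w Hs ij Hin; simpl in *. contradiction.
  destruct Hin as [<-|Hin].
  - simpl. rewrite length_firstn. lia.
  - apply (IH (skipn i w)); auto. rewrite length_skipn. lia.
Qed.
Lemma blocks_length comp w : length (blocks comp w) = length comp.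
Proof. revert w; induction comp; simpl; auto. Qed.
Lemma len_le_sum comp : (forall i, In i comp -> (1 <= i)%nat) -> (length comp <= sumn comp)%nat.
Proof.
  induction comp; simpl; intros H. lia.
  assert (1 <= a)%nat by auto. assert (length comp <= sumn comp)%nat by auto. lia.
Qed.

Definition smor_rhs (sf sm' : nat -> list pl -> sv) (w : list pl) : sv :=
  svsum (map (fun comp =>
          svscale (ssign (mor_exp comp w 0))
            (sopM sm' (length comp)
               (map (fun ij => sopF sf (fst ij) (map sinj (snd ij)))
                    (combine comp (blocks comp w)))))
        (comps (length w))).

Lemma smor_rhs_ok env sf sm' f m' w :
  (forall comp, In comp (comps (length w)) ->
     (forall i, In i comp -> (1 <= i)%nat) /\ sumn comp = length w) ->
  (forall q u, (3 <= q)%nat -> (q <= length w)%nat -> composable u = true -> length u = q ->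
      vden env (sm' q u) = m' q u) ->
  (forall q u, q <> 1%nat -> composable u = true -> length u = q -> vden env (sf q u) = f q u) ->
  forall c, vden env (smor_rhs sf sm' w) c = mor_rhs f m' w c.
Proof.
  intros Hc Hm Hf c. unfold smor_rhs, mor_rhs. rewrite vden_sum_pt, vsum_pt, !map_map.
  f_equal. apply map_ext_in. intros comp Hin. destruct (Hc comp Hin) as [H1 H2].
  rewrite vden_scale, sden_sign. unfold vscale. f_equal.
  rewrite sopM_ok with (m := m').
  - rewrite map_map. f_equal. apply map_ext_in. intros ij Hij.
    rewrite sopF_ok with (f := f).
    + rewrite vden_map_sinj; reflexivity.
    + intros u Hn Hu Hl. apply Hf; auto.
      rewrite Hl, length_map. apply (blocks_len comp w); auto.
  - intros u H3 Hu Hl. apply Hm; auto.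
    + pose proof (len_le_sum comp H1). lia.
    + rewrite Hl, length_map, length_combine, blocks_length. lia.
Qed.

Definition shoch (sphi : list pl -> sv) (w : list pl) : sv :=
  let n := (length w - 1)%nat in
  let iw := map sinj w in
  svsum ([svmul (nth 0 iw svzero) (seval sphi (tl iw))] ++
        map (fun i => svscale (ssign i)
               (seval sphi (firstn (i - 1) iw ++
                          [svmul (nth (i - 1) iw svzero) (nth i iw svzero)] ++
                          skipn (i + 1) iw)))
            (seq 1 n) ++
        [svscale (ssign (n + 1)) (svmul (seval sphi (removelast iw)) (last iw svzero))]).

Lemma removelast_map {A B} (f : A -> B) l : removelast (map f l) = map f (removelast l).
Proof. induction l as [|a [|b l] IH]; simpl; auto. simpl in IH. rewrite IH. reflexivity. Qed.
Lemma last_map {A B} (f : A -> B) l d : last (map f l) (f d) = f (last l d).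
Proof. induction l as [|a [|b l] IH]; simpl; auto. Qed.

Lemma shoch_ok env sphi phi w :
  (forall u, vden env (sphi u) = phi u) ->
  forall c, vden env (shoch sphi w) c = hoch phi w c.
Proof.
  intros H c.
  assert (He : forall vs, vden env (seval sphi vs) = eval phi (map (vden env) vs)).
  { intro vs. apply seval_ok. intros; apply H. }
  unfold shoch, hoch. rewrite vden_sum, !map_app. simpl map.
  rewrite vden_mul, He, vden_scale, vden_mul, He.
  rewrite <- (vden_map_sinj env w), sden_sign. generalize (map sinj w) as iw; intro iw.
  rewrite vden_nth, <- tl_map, removelast_map, <- (vden_zero env), last_map.
  do 4 f_equal. rewrite map_map. apply map_ext. intro i.
  rewrite vden_scale, sden_sign, He, !map_app, firstn_map, skipn_map. simpl.
  rewrite vden_mul, !map_nth. reflexivity.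
Qed.

(* Composable words form a tree: after a letter y only letters x with
   rgt y = lft x may follow.  Tries store a symbolic vector for each composable
   word of a fixed length, and [all_composable] tests a property on all of them. *)
Inductive trie := TE | TL (v : sv) | TN (a b c d : trie).

Definition compat (prev : option pl) (x : pl) : bool :=
  match prev with None => true | Some y => obj_eqb (rgt (P y)) (lft (P x)) end.

Fixpoint cf (prev : option pl) (w : list pl) : bool :=
  match w with [] => true | x :: w' => (compat prev x && cf (Some x) w')%bool end.

Lemma cf_some y w : cf (Some y) w = composable (y :: w).
Proof.
  revert y; induction w as [|x w IH]; intro y; simpl. reflexivity.
  rewrite IH. reflexivity.
Qed.
Lemma cf_none w : cf None w = composable w.
Proof. destruct w. reflexivity. simpl. apply cf_some. Qed.

Fixpoint mk_trie (f : list pl -> sv) (d : nat) (prev : option pl) : trie :=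
  match d with
  | O => TL (f [])
  | S d' =>
    TN (if compat prev Th then mk_trie (fun w => f (Th :: w)) d' (Some Th) else TE)
       (if compat prev Et then mk_trie (fun w => f (Et :: w)) d' (Some Et) else TE)
       (if compat prev Xi then mk_trie (fun w => f (Xi :: w)) d' (Some Xi) else TE)
       (if compat prev XiL then mk_trie (fun w => f (XiL :: w)) d' (Some XiL) else TE)
  end.

Fixpoint lookup (t : trie) (w : list pl) : sv :=
  match t, w with
  | TL v, [] => v
  | TN a b c d, x :: w' => lookup (match x with Th => a | Et => b | Xi => c | XiL => d end) w'
  | _, _ => svzero
  end.

Lemma lookup_TE w : lookup TE w = svzero.
Proof. destruct w; reflexivity. Qed.

Lemma lookup_mk d : forall f prev w,
  lookup (mk_trie f d prev) w = if (Nat.eqb (length w) d && cf prev w)%bool then f w else svzero.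
Proof.
  induction d as [|d IH]; intros f prev w.
  - destruct w; reflexivity.
  - destruct w as [|x w]. reflexivity.
    simpl. destruct x; destruct (compat prev _); simpl; rewrite ?IH, ?lookup_TE;
    try reflexivity; destruct (Nat.eqb (length w) d); reflexivity.
Qed.

Lemma lookup_mk_ok f d w :
  length w = d -> composable w = true -> lookup (mk_trie f d None) w = f w.
Proof. intros H1 H2. rewrite lookup_mk, cf_none, H2, H1, Nat.eqb_refl. reflexivity. Qed.

Fixpoint all_composable (f : list pl -> bool) (d : nat) (prev : option pl) : bool :=
  match d with
  | O => f []
  | S d' =>
    ((if compat prev Th then all_composable (fun w => f (Th :: w)) d' (Some Th) else true) &&
     (if compat prev Et then all_composable (fun w => f (Et :: w)) d' (Some Et) else true) &&
     (if compat prev Xi then all_composable (fun w => f (Xi :: w)) d' (Some Xi) else true) &&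
     (if compat prev XiL then all_composable (fun w => f (XiL :: w)) d' (Some XiL) else true))%bool
  end.

Lemma all_composable_after d : forall f prev, all_composable f d prev = true ->
  forall w, length w = d -> cf prev w = true -> f w = true.
Proof.
  induction d as [|d IH]; intros f prev H w Hl Hc.
  - destruct w; [exact H | discriminate].
  - destruct w as [|x w]; [discriminate|]. simpl in Hl, Hc. injection Hl; intro Hl'.
    apply andb_prop in Hc; destruct Hc as [Hc1 Hc2]. simpl in H.
    repeat rewrite andb_true_iff in H. destruct H as [[[H1 H2] H3] H4].
    destruct x; rewrite Hc1 in *;
    [apply (IH _ _ H1) | apply (IH _ _ H2) | apply (IH _ _ H3) | apply (IH _ _ H4)]; auto.
Qed.

Lemma in_bbs c : In c bbs.
Proof. destruct c as [| |[]]; simpl; tauto. Qed.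

Lemma all_composable_ok f d u c : all_composable (fun u => forallb (f u) bbs) d None = true ->
  length u = d -> composable u = true -> f u c = true.
Proof.
  intros H H1 H2. pose proof (all_composable_after d _ None H u H1) as K.
  rewrite cf_none in K. specialize (K H2). rewrite forallb_forall in K. apply K, in_bbs.
Qed.

(** * Solving the morphism equation arity by arity *)

(* In arity n the right-hand side of the morphism equation contains m'_n only
   through the composition (1,...,1), with sign +1; all other compositions
   involve m'_k with k < n. *)
Definition comps_facts (n : nat) : bool :=
  (forallb (fun comp => forallb (fun i => Nat.leb 1 i) comp && Nat.eqb (sumn comp) n) (comps n) &&
   Nat.eqb (length (filter (fun comp => Nat.eqb (length comp) n) (comps n))) 1)%bool.

Lemma comps_facts_small n : (1 <= n <= 8)%nat -> comps_facts n = true.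
Proof.
  intro H. assert (K : forallb comps_facts (seq 1 8) = true) by (vm_compute; reflexivity).
  rewrite forallb_forall in K. apply K, in_seq. lia.
Qed.

Lemma comps_prop n : (1 <= n <= 8)%nat -> forall comp, In comp (comps n) ->
  (forall i, In i comp -> (1 <= i)%nat) /\ sumn comp = n.
Proof.
  intros Hn comp Hin. pose proof (comps_facts_small n Hn) as K.
  apply andb_prop in K. destruct K as [K _]. rewrite forallb_forall in K.
  specialize (K comp Hin). apply andb_prop in K. destruct K as [K1 K2].
  rewrite forallb_forall in K1. split.
  - intros i Hi. apply Nat.leb_le; auto.
  - apply Nat.eqb_eq; auto.
Qed.

Lemma ones_of comp : (forall i, In i comp -> (1 <= i)%nat) -> sumn comp = length comp ->
  comp = repeat 1%nat (length comp).
Proof.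
  induction comp as [|a c IH]; intros H1 H2. reflexivity.
  simpl in *. assert (1 <= a)%nat by auto.
  pose proof (len_le_sum c (fun i Hi => H1 i (or_intror Hi))).
  assert (a = 1%nat) by lia. subst. f_equal. apply IH; [now auto | lia].
Qed.

Lemma mor_exp_ones k : forall w D, mor_exp (repeat 1%nat k) w D = 0%nat.
Proof. induction k; intros; simpl; auto. rewrite IHk. lia. Qed.

Lemma args_ones f w : map (fun ij => opF f (fst ij) (map inj (snd ij)))
     (combine (repeat 1%nat (length w)) (blocks (repeat 1%nat (length w)) w)) = map inj w.
Proof. induction w; simpl; auto. rewrite IHw. reflexivity. Qed.

Lemma Csum_ifs {A} (p : A -> bool) X l :
  Csum (map (fun x => if p x then X else C0) l) = Csum (map (fun _ => X) (filter p l)).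
Proof. induction l; simpl. reflexivity. destruct (p a); simpl; rewrite IHl; ring. Qed.

Definition cut (mp : nat -> cochain) (n : nat) : nat -> cochain :=
  fun q => if Nat.ltb q n then mp q else fun _ => vzero.

Lemma mor_rhs_term_split f mp w c comp :
  composable w = true -> (3 <= length w)%nat ->
  (forall i, In i comp -> (1 <= i)%nat) -> sumn comp = length w ->
  let args := map (fun ij => opF f (fst ij) (map inj (snd ij))) (combine comp (blocks comp w)) in
  vscale (Csign (mor_exp comp w 0)) (opM mp (length comp) args) c
  = Cadd (vscale (Csign (mor_exp comp w 0)) (opM (cut mp (length w)) (length comp) args) c)
         (if Nat.eqb (length comp) (length w) then mp (length w) w c else C0).
Proof.
  intros Hw Hn H1 H2 args. subst args. pose proof (len_le_sum comp H1) as Hle.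
  destruct (Nat.eqb (length comp) (length w)) eqn:E.
  - apply Nat.eqb_eq in E. assert (Hc : comp = repeat 1%nat (length w)).
    { rewrite <- E. apply ones_of; auto. lia. }
    subst comp. rewrite repeat_length, mor_exp_ones, args_ones.
    unfold vscale. change (Csign 0) with C1.
    destruct (length w) as [|[|[|k]]] eqn:El; try lia. cbn [opM].
    unfold cut. rewrite Nat.ltb_irrefl, eval_zero_cochain, <- El, eval_basis by auto. ring.
  - apply Nat.eqb_neq in E.
    assert (Eq : opM (cut mp (length w)) (length comp) = opM mp (length comp)).
    { extensionality vs. destruct (length comp) as [|[|[|k]]] eqn:El; try reflexivity.
      cbn [opM]. unfold cut. rewrite (proj2 (Nat.ltb_lt _ _)) by lia. reflexivity. }
    rewrite Eq. ring.
Qed.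

Lemma mor_rhs_split f mp w c : composable w = true -> (3 <= length w <= 8)%nat ->
  mor_rhs f mp w c = Cadd (mor_rhs f (cut mp (length w)) w c) (mp (length w) w c).
Proof.
  intros Hw Hn. unfold mor_rhs. rewrite !vsum_pt, !map_map.
  erewrite map_ext_in; cycle 1.
  { intros comp Hin. destruct (comps_prop (length w) ltac:(lia) comp Hin) as [H1 H2].
    exact (mor_rhs_term_split f mp w c comp Hw ltac:(lia) H1 H2). }
  rewrite Csum_map_add. f_equal. rewrite Csum_ifs.
  pose proof (comps_facts_small (length w) ltac:(lia)) as K.
  apply andb_prop in K. destruct K as [_ K]. apply Nat.eqb_eq in K.
  destruct (filter _ (comps (length w))) as [|x [|y l]]; simpl in K; try lia.
  simpl. ring.
Qed.

(* Given symbolic m (sm) and f (sf), tbl sm sf N lists, for q <= N, a trie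
   holding (f*m)_q, computed from the morphism equation solved for m'_q. *)
Definition cutT (tabs : list trie) (n : nat) : nat -> list pl -> sv :=
  fun q => if Nat.ltb q n then lookup (nth q tabs TE) else fun _ => svzero.
Definition solve_word (sm sf : nat -> list pl -> sv) (tabs : list trie) (n : nat)
  (w : list pl) : sv :=
  svsub (smor_lhs sm sf w) (smor_rhs sf (cutT tabs n) w).
Fixpoint tbl (sm sf : nat -> list pl -> sv) (N : nat) : list trie :=
  match N with
  | O => [TE]
  | S N' => let L := tbl sm sf N' in
      L ++ [if Nat.ltb N 3 then TE else mk_trie (solve_word sm sf L N) N None]
  end.

Lemma tbl_length sm sf N : length (tbl sm sf N) = S N.
Proof. induction N; simpl; auto. rewrite length_app, IHN. simpl. lia. Qed.

Lemma tbl_ok env m f mp sm sf :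
  (forall q u, (3 <= q <= 8)%nat -> composable u = true -> length u = q ->
     vden env (sm q u) = m q u) ->
  (forall q u, q <> 1%nat -> composable u = true -> length u = q -> vden env (sf q u) = f q u) ->
  is_morphism m f mp ->
  forall N, (N <= 8)%nat -> forall q u, (3 <= q <= N)%nat -> composable u = true ->
    length u = q -> vden env (lookup (nth q (tbl sm sf N) TE) u) = mp q u.
Proof.
  intros Hm Hf Hmor N. induction N as [|N IH]; intros HN q u Hq Hu Hl. lia.
  cbn [tbl]. destruct (Nat.eq_dec q (S N)) as [->|Hne].
  - rewrite app_nth2 by (rewrite tbl_length; lia). rewrite tbl_length, Nat.sub_diag.
    cbn [nth]. destruct (Nat.ltb (S N) 3) eqn:E. apply Nat.ltb_lt in E; lia.
    rewrite lookup_mk_ok by auto. extensionality c. unfold solve_word. rewrite vden_sub.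
    rewrite smor_lhs_ok with (m := m) (f := f); auto.
    2:{ intros q' u' H1 H2 H3 H4. apply Hm; auto. lia. }
    rewrite smor_rhs_ok with (f := f) (m' := cut mp (S N)); auto.
    + rewrite (Hmor u c Hu ltac:(lia)), mor_rhs_split by (auto; lia). rewrite Hl. ring.
    + intros. apply comps_prop; auto. lia.
    + intros q' u' H1 H2 H3 H4. unfold cutT, cut. destruct (Nat.ltb q' (S N)) eqn:E2.
      * apply Nat.ltb_lt in E2. apply IH; auto; lia.
      * apply vden_zero.
  - rewrite app_nth1 by (rewrite tbl_length; lia). apply IH; auto; lia.
Qed.

(** * Polishchuk's structure with symbolic scalars *)

(* the 14 coefficients of a degree -2 bimodule 3-cochain: composable words of
   length 3 with their only allowed output basis element *)
Definition f3_slots : list (list pl * bb) :=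
  [([Th;Et;Xi],IdO); ([Th;XiL;Et],IdO); ([Th;XiL;XiL],P Th); ([Et;Th;XiL],IdL);
   ([Et;Xi;Th],IdL); ([Et;Xi;Xi],P Et); ([Xi;Th;Et],IdO); ([Xi;Th;XiL],P Th);
   ([Xi;Xi;Th],P Th); ([Xi;Xi;Xi],P Xi); ([XiL;Et;Th],IdL); ([XiL;Et;Xi],P Et);
   ([XiL;XiL;Et],P Et); ([XiL;XiL;XiL],P XiL)].

(* atom 1 is t, atoms 2-7 are the g_{a,b} with a + b <= 5 odd, and atoms
   8-21 the coefficients of f3 in the order of f3_slots *)
Definition mkenv (ti : R) (S : nat -> nat -> Cx) (f3 : cochain) : list Cx :=
  [RC (tpar ti); g_ab ti S 0 1; g_ab ti S 0 3; g_ab ti S 1 2; g_ab ti S 0 5;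
   g_ab ti S 1 4; g_ab ti S 2 3] ++ map (fun uc => f3 (fst uc) (snd uc)) f3_slots.

Definition st : sc := satom 1.
Fixpoint spow (p : sc) (n : nat) : sc :=
  match n with O => sone | S k => smul p (spow p k) end.
Definition sG (p q : nat) : sc :=
  if Nat.even (p + q) then szero else
  match Nat.min p q, Nat.max p q with
  | 0%nat, 1%nat => satom 2 | 0%nat, 3%nat => satom 3 | 1%nat, 2%nat => satom 4
  | 0%nat, 5%nat => satom 5 | 1%nat, 4%nat => satom 6 | 2%nat, 3%nat => satom 7
  | _, _ => szero end.

Definition sMc (a b c d : nat) : sc :=
  let s := (a + b + c + d)%nat in
  smul (ssign (binom (s + 1) 2))
    (smul (smul (sconst (1 # Pos.of_nat (fact a * fact b * fact c * fact d)))
                (spow st (s + 1)))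
          (sG (a + c) (b + d))).

Lemma g_sym ti S a b : g_ab ti S a b = g_ab ti S b a.
Proof.
  unfold g_ab. rewrite (Nat.add_comm b a). destruct (Nat.even (a + b)); auto.
  f_equal. apply map_ext. intro k. rewrite (Nat.add_comm (binom b k)). reflexivity.
Qed.

Lemma Q2R_inv_nat n : Q2R (1 # Pos.of_nat (S n)) = / INR (S n).
Proof.
  unfold Q2R. rewrite INR_IZR_INZ.
  change (QDen (1 # Pos.of_nat (S n))) with (Z.pos (Pos.of_nat (S n))).
  rewrite <- Pos.of_nat_succ. change (Z.of_nat (S n)) with (Z.pos (Pos.of_succ_nat n)).
  simpl Qnum. lra.
Qed.

Section SymbolicPolishchuk.
Variables (ti : R) (Sv : nat -> nat -> Cx) (f3 : cochain).
Local Notation env := (mkenv ti Sv f3).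

Lemma sden_pow k : sden env (spow st k) = RC (tpar ti ^ k).
Proof.
  induction k; simpl spow.
  - rewrite sden_one. reflexivity.
  - rewrite sden_mul, IHk. unfold st. rewrite sden_atom. simpl BinList.nth.
    rewrite <- RC_mul. reflexivity.
Qed.

Lemma sG_ok p q : (p + q <= 5)%nat -> sden env (sG p q) = g_ab ti Sv p q.
Proof.
  intro H. unfold sG. destruct (Nat.even (p + q)) eqn:E.
  { rewrite sden_zero. unfold g_ab. rewrite E. reflexivity. }
  assert (K : forall x y, (x <= y)%nat -> (x + y <= 5)%nat -> Nat.even (x + y) = false ->
     sden env match x, y with
       | 0%nat, 1%nat => satom 2 | 0%nat, 3%nat => satom 3 | 1%nat, 2%nat => satom 4
       | 0%nat, 5%nat => satom 5 | 1%nat, 4%nat => satom 6 | 2%nat, 3%nat => satom 7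
       | _, _ => szero end = g_ab ti Sv x y).
  { intros x y Hxy Hs He.
    destruct x as [|[|[|[|[|[|x]]]]]]; destruct y as [|[|[|[|[|[|y]]]]]]; try lia;
    try discriminate He; rewrite ?sden_atom; reflexivity. }
  destruct (Nat.le_ge_cases p q).
  - rewrite Nat.min_l, Nat.max_r by lia. apply K; auto.
  - rewrite Nat.min_r, Nat.max_l by lia. rewrite g_sym. apply K; [lia | lia | rewrite Nat.add_comm; exact E].
Qed.

Lemma sMc_ok a b c d : (a + b + c + d <= 5)%nat -> sden env (sMc a b c d) = Mc ti Sv a b c d.
Proof.
  intro H. unfold sMc, Mc. rewrite !sden_mul, sden_sign, sG_ok by lia. do 2 f_equal.
  rewrite sden_const, sden_pow. unfold Qphi.
  assert (Hf : (0 < fact a * fact b * fact c * fact d)%nat).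
  { pose proof (lt_O_fact a); pose proof (lt_O_fact b);
    pose proof (lt_O_fact c); pose proof (lt_O_fact d).
    repeat apply Nat.mul_pos_pos; auto. }
  destruct (fact a * fact b * fact c * fact d)%nat as [|N]; [lia|].
  rewrite Q2R_inv_nat. unfold Rdiv. rewrite RC_mul. ring.
Qed.
End SymbolicPolishchuk.

Lemma vsum_app l1 l2 : vsum (l1 ++ l2) = vadd (vsum l1) (vsum l2).
Proof.
  induction l1 as [|v l1 IH]; simpl.
  - extensionality c. unfold vadd, vzero. ring.
  - rewrite IH. extensionality c. unfold vadd. ring.
Qed.

(* Polishchuk's m_n with symbolic coefficients; the index tuples are filtered
   once per arity, so that evaluating on many words stays cheap *)
Definition spolish (n : nat) : list pl -> sv :=
  if Nat.ltb n 3 then fun _ => svzero else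
  let L4 := filter (fun '(a, b, c, d) => Nat.eqb (a + b + c + d + 3) n) (tuples4 n) in
  let L5 := filter (fun '(a, b, c, d, e) => Nat.eqb (a + b + c + d + e + 4) n) (tuples5 n) in
  fun w =>
  svsum (map (fun '(a, b, c, d) =>
            svadd (if word_eqb w (word1 a b c d)
                  then svscale (sMc a b c d) (sbv (P Th)) else svzero)
                 (if word_eqb w (word2 a b c d)
                  then svscale (sMc a b c d) (sbv (P Et)) else svzero)) L4
      ++ map (fun '(a, b, c, d, e) =>
            svadd (if word_eqb w (word3 a b c d e)
                  then svscale (sMc (a + e + 1) b c d) (sbv IdO) else svzero)
                 (if word_eqb w (word4 a b c d e)
                  then svscale (sMc (a + e + 1) b c d) (sbv IdL) else svzero)) L5).

Lemma spolish_ok ti Sv f3 n w : (n <= 8)%nat ->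
  vden (mkenv ti Sv f3) (spolish n w) = polishchuk ti Sv n w.
Proof.
  intro Hn. unfold spolish, polishchuk. destruct (Nat.ltb n 3). apply vden_zero.
  rewrite vden_sum, map_app, vsum_app, <- vden_sum, <- vden_sum, vsum_app. f_equal.
  - apply vden_sum_filter; intros [[[a b] c] d] H; cbv beta iota in H |- *; rewrite H;
      [|reflexivity].
    apply Nat.eqb_eq in H. rewrite vden_add. f_equal.
    + destruct (word_eqb w (word1 a b c d)); [|apply vden_zero].
      rewrite vden_scale, vden_bv, sMc_ok by lia. reflexivity.
    + destruct (word_eqb w (word2 a b c d)); [|apply vden_zero].
      rewrite vden_scale, vden_bv, sMc_ok by lia. reflexivity.
  - apply vden_sum_filter; intros [[[[a b] c] d] e] H; cbv beta iota in H |- *; rewrite H;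
      [|reflexivity].
    apply Nat.eqb_eq in H. rewrite vden_add. f_equal.
    + destruct (word_eqb w (word3 a b c d e)); [|apply vden_zero].
      rewrite vden_scale, vden_bv, sMc_ok by lia. reflexivity.
    + destruct (word_eqb w (word4 a b c d e)); [|apply vden_zero].
      rewrite vden_scale, vden_bv, sMc_ok by lia. reflexivity.
Qed.

Definition polishT : list trie := map (fun q => mk_trie (spolish q) q None) (seq 0 9).
Definition smP (q : nat) (u : list pl) : sv := lookup (nth q polishT TE) u.

Lemma smP_ok ti Sv f3 q u : (3 <= q <= 8)%nat -> composable u = true -> length u = q ->
  vden (mkenv ti Sv f3) (smP q u) = polishchuk ti Sv q u.
Proof.
  intros Hq Hc Hl. unfold smP.
  replace (nth q polishT TE) with (mk_trie (spolish q) q None)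
    by (do 9 (destruct q as [|q]; [reflexivity|]); lia).
  rewrite lookup_mk_ok by auto. apply spolish_ok. lia.
Qed.

Definition sstrict3 (sf3 : list pl -> sv) : nat -> list pl -> sv :=
  fun n => if Nat.eqb n 3 then sf3 else fun _ => svzero.

Lemma sstrict3_ok env (sf3 : list pl -> sv) (g : cochain) :
  (forall u, composable u = true -> length u = 3%nat -> vden env (sf3 u) = g u) ->
  forall q u, q <> 1%nat -> composable u = true -> length u = q ->
    vden env (sstrict3 sf3 q u) = strict3 g q u.
Proof.
  intros H q u _ Hc Hl. unfold sstrict3, strict3. destruct (Nat.eqb q 3) eqn:E.
  - apply Nat.eqb_eq in E. subst. apply H; auto.
  - apply vden_zero.
Qed.

Lemma transfer_table_ok ti Sv f3 sg g mp :
  (forall u, composable u = true -> length u = 3%nat -> vden (mkenv ti Sv f3) (sg u) = g u) ->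
  is_morphism (polishchuk ti Sv) (strict3 g) mp ->
  forall N q u, (N <= 8)%nat -> (3 <= q <= N)%nat -> composable u = true -> length u = q ->
    vden (mkenv ti Sv f3) (lookup (nth q (tbl smP (sstrict3 sg) N) TE) u) = mp q u.
Proof.
  intros Hg Hmor N q u HN Hq Hc Hl.
  exact (tbl_ok _ _ _ mp _ _ (fun q u Hq => smP_ok ti Sv f3 q u Hq)
           (sstrict3_ok _ sg g Hg) Hmor N HN q u Hq Hc Hl).
Qed.

Definition sf3ctx (w : list pl) : sv :=
  svscale (sMc 1 0 0 0)
  (match w with
   | [Et; Xi; Xi] => sbv (P Et)
   | [XiL; XiL; Et] => svscale (sconst (-1)%Q) (sbv (P Et))
   | [XiL; Et; Xi] => svscale (sconst (-1)%Q) (sbv (P Et))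
   | [Th; XiL; XiL] => sbv (P Th)
   | [Xi; Xi; Th] => svscale (sconst (-1)%Q) (sbv (P Th))
   | [Xi; Th; XiL] => svscale (sconst (-1)%Q) (sbv (P Th))
   | [Xi; Th; Et] => sbv IdO
   | [Th; XiL; Et] => sbv IdO
   | [Th; Et; Xi] => svscale (sconst (-1)%Q) (sbv IdO)
   | [XiL; Et; Th] => sbv IdL
   | [Et; Xi; Th] => sbv IdL
   | [Et; Th; XiL] => svscale (sconst (-1)%Q) (sbv IdL)
   | _ => svzero end).

Lemma sf3ctx_ok ti Sv f3 w : vden (mkenv ti Sv f3) (sf3ctx w) = f3ctx ti Sv w.
Proof.
  unfold sf3ctx, f3ctx. rewrite vden_scale, sMc_ok by lia. f_equal.
  destruct w as [|x [|y [|z [|u w]]]]; repeat match goal with q : pl |- _ => destruct q end;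
  rewrite ?vden_scale, ?sden_minus_one, ?vden_bv; first [reflexivity | apply vden_zero].
Qed.

(** * Step 3: the normal form of f'_3 *)

Definition allowedb (D : Z) (u : list pl) (c : bb) : bool :=
  match u with
  | [] => false
  | x :: w => (obj_eqb (lft c) (lft (P x)) && obj_eqb (rgt c) (rgt (P (last w x))) &&
               Z.eqb (degb c) (Z.of_nat (degsum u) + D))%bool
  end.

Lemma obj_eqb_refl o : obj_eqb o o = true.
Proof. destruct o; reflexivity. Qed.
Lemma obj_eqb_eq a b : obj_eqb a b = true -> a = b.
Proof. destruct a, b; simpl; congruence. Qed.

Lemma allowed_sound D x w c : allowedb D (x :: w) c = true ->
  lft c = lft (P x) /\ rgt c = rgt (P (last w x)) /\
  degb c = (Z.of_nat (degsum (x :: w)) + D)%Z.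
Proof.
  unfold allowedb. intro H. repeat rewrite andb_true_iff in H. destruct H as [[H1 H2] H3].
  split; [|split]; [apply obj_eqb_eq | apply obj_eqb_eq | apply Z.eqb_eq]; auto.
Qed.

Lemma zero_outside (phi : cochain) D u c : bimod phi -> homog phi D -> composable u = true ->
  u <> [] -> allowedb D u c = false -> phi u c = C0.
Proof.
  intros Hb Hh Hc Hne E. destruct u as [|x w]; [congruence|].
  destruct (classic (phi (x :: w) c = C0)) as [H|H]; auto. exfalso.
  destruct (Hb x w c Hc H) as [E1 E2]. pose proof (Hh (x :: w) c Hc H) as E3.
  unfold allowedb in E. rewrite E1, E2, E3, !obj_eqb_refl, Z.eqb_refl in E. discriminate.
Qed.

(* the generic f'_3: its coefficient on the k-th slot of f3_slots is atom 7+k *)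
Fixpoint slot_atom (l : list (list pl * bb)) (k : positive) (u : list pl) (c : bb) : positive :=
  match l with
  | [] => 1%positive
  | (u', c') :: l => if (word_eqb u u' && bb_eqb c c')%bool then k else slot_atom l (Pos.succ k) u c
  end.
Definition sf3gen (u : list pl) : sv :=
  smk (fun c => if allowedb (-2) u c then satom (slot_atom f3_slots 8 u c) else szero).

Lemma sf3gen_ok ti Sv f3 u : bimod f3 -> homog f3 (-2)%Z ->
  composable u = true -> length u = 3%nat -> vden (mkenv ti Sv f3) (sf3gen u) = f3 u.
Proof.
  intros Hb Hh Hc Hl. extensionality c. unfold vden, sf3gen. rewrite sget_mk.
  destruct (allowedb (-2) u c) eqn:E.
  - rewrite sden_atom. destruct u as [|x [|y [|z [|]]]]; try discriminate Hl.
    destruct x, y, z; try discriminate Hc; destruct c as [| |[]]; try discriminate E; reflexivity.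
  - rewrite sden_zero. symmetry. apply (zero_outside f3 (-2)%Z); auto.
    intro; subst; discriminate.
Qed.

(* lambda, mu = deviation of f'_3 from f_3 on theta eta xi and eta theta xi_L
   (f_3 takes there the values t^2 g_{0,1} id_O and t^2 g_{0,1} id_L) *)
Definition slam : sc := ssub (satom 8) (smul (spow st 2) (satom 2)).
Definition smu : sc := ssub (satom 11) (smul (spow st 2) (satom 2)).

(* the two directions in which f'_3 may deviate from f_3 *)
Definition k1 (w : list pl) : sv :=
  match w with
  | [Th; Et; Xi] => sbv IdO
  | [Et; Xi; Xi] => svscale (sconst (-1)%Q) (sbv (P Et))
  | [Xi; Th; Et] => svscale (sconst (-1)%Q) (sbv IdO)
  | [Xi; Xi; Th] => sbv (P Th)
  | _ => svzero end.
Definition k2 (w : list pl) : sv :=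
  match w with
  | [Th; XiL; XiL] => svscale (sconst (-1)%Q) (sbv (P Th))
  | [Et; Th; XiL] => sbv IdL
  | [XiL; Et; Th] => svscale (sconst (-1)%Q) (sbv IdL)
  | [XiL; XiL; Et] => sbv (P Et)
  | _ => svzero end.

Definition sf3p (u : list pl) : sv :=
  svadd (sf3ctx u) (svadd (svscale slam (k1 u)) (svscale smu (k2 u))).

(* Certificates: for each slot (u, c), a rational combination of coefficients
   (w, c') of (f'*m)_4 equal to (generic f'_3 - normal form)(u)_c. *)
Definition certs : list (list pl * bb * list (Q * list pl * bb)) := [
  ([Th;Et;Xi], IdO, []);
  ([Th;XiL;Et], IdO, [((1#3)%Q, [Th;Et;Th;XiL], (P Th)); ((-1#3)%Q, [Th;XiL;Et;Th], (P Th)); ((-2#3)%Q, [Th;XiL;XiL;Et], (P Xi)); ((-1#3)%Q, [Et;Th;Et;Th], IdL); ((-2#3)%Q, [Et;Th;XiL;Et], (P Et)); ((1#3)%Q, [Et;Xi;Th;XiL], (P XiL))]);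
  ([Th;XiL;XiL], (P Th), [((-1#3)%Q, [Th;Et;Th;XiL], (P Th)); ((1#3)%Q, [Th;XiL;Et;Th], (P Th)); ((-1#3)%Q, [Th;XiL;XiL;Et], (P Xi)); ((1#3)%Q, [Et;Th;Et;Th], IdL); ((-1#3)%Q, [Et;Th;XiL;Et], (P Et)); ((-1#3)%Q, [Et;Xi;Th;XiL], (P XiL))]);
  ([Et;Th;XiL], IdL, []);
  ([Et;Xi;Th], IdL, [((-2#3)%Q, [Th;Et;Th;XiL], (P Th)); ((-1#3)%Q, [Th;XiL;Et;Th], (P Th)); ((1#3)%Q, [Th;XiL;XiL;Et], (P Xi)); ((-1#3)%Q, [Et;Th;Et;Th], IdL); ((1#3)%Q, [Et;Th;XiL;Et], (P Et)); ((-2#3)%Q, [Et;Xi;Th;XiL], (P XiL))]);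
  ([Et;Xi;Xi], (P Et), [((-1#3)%Q, [Th;Et;Th;XiL], (P Th)); ((1#3)%Q, [Th;XiL;Et;Th], (P Th)); ((-1#1)%Q, [Th;XiL;Et;Xi], (P Xi)); ((2#3)%Q, [Th;XiL;XiL;Et], (P Xi)); ((1#3)%Q, [Et;Th;Et;Th], IdL); ((-1#1)%Q, [Et;Th;Et;Xi], (P Et)); ((2#3)%Q, [Et;Th;XiL;Et], (P Et)); ((-1#3)%Q, [Et;Xi;Th;XiL], (P XiL))]);
  ([Xi;Th;Et], IdO, [((1#1)%Q, [Th;Et;Th;Et], IdO); ((1#3)%Q, [Th;Et;Th;XiL], (P Th)); ((-1#3)%Q, [Th;XiL;Et;Th], (P Th)); ((-2#3)%Q, [Th;XiL;XiL;Et], (P Xi)); ((-1#3)%Q, [Et;Th;Et;Th], IdL); ((-2#3)%Q, [Et;Th;XiL;Et], (P Et)); ((1#3)%Q, [Et;Xi;Th;XiL], (P XiL))]);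
  ([Xi;Th;XiL], (P Th), [((2#3)%Q, [Th;Et;Th;XiL], (P Th)); ((1#3)%Q, [Th;XiL;Et;Th], (P Th)); ((-1#3)%Q, [Th;XiL;XiL;Et], (P Xi)); ((1#3)%Q, [Et;Th;Et;Th], IdL); ((-1#3)%Q, [Et;Th;XiL;Et], (P Et)); ((-1#3)%Q, [Et;Xi;Th;XiL], (P XiL))]);
  ([Xi;Xi;Th], (P Th), [((-2#3)%Q, [Th;Et;Th;XiL], (P Th)); ((1#1)%Q, [Th;Et;Xi;Th], (P Th)); ((-1#3)%Q, [Th;XiL;Et;Th], (P Th)); ((1#3)%Q, [Th;XiL;XiL;Et], (P Xi)); ((-1#3)%Q, [Et;Th;Et;Th], IdL); ((1#3)%Q, [Et;Th;XiL;Et], (P Et)); ((-2#3)%Q, [Et;Xi;Th;XiL], (P XiL))]);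
  ([Xi;Xi;Xi], (P Xi), [((-1#3)%Q, [Th;Et;Th;XiL], (P Th)); ((1#1)%Q, [Th;Et;Xi;Xi], (P Xi)); ((1#3)%Q, [Th;XiL;Et;Th], (P Th)); ((-1#1)%Q, [Th;XiL;Et;Xi], (P Xi)); ((2#3)%Q, [Th;XiL;XiL;Et], (P Xi)); ((1#3)%Q, [Et;Th;Et;Th], IdL); ((-1#1)%Q, [Et;Th;Et;Xi], (P Et)); ((2#3)%Q, [Et;Th;XiL;Et], (P Et)); ((-1#3)%Q, [Et;Xi;Th;XiL], (P XiL))]);
  ([XiL;Et;Th], IdL, [((-2#3)%Q, [Th;Et;Th;XiL], (P Th)); ((-1#3)%Q, [Th;XiL;Et;Th], (P Th)); ((1#3)%Q, [Th;XiL;XiL;Et], (P Xi)); ((2#3)%Q, [Et;Th;Et;Th], IdL); ((1#3)%Q, [Et;Th;XiL;Et], (P Et)); ((-2#3)%Q, [Et;Xi;Th;XiL], (P XiL))]);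
  ([XiL;Et;Xi], (P Et), [((-1#3)%Q, [Th;Et;Th;XiL], (P Th)); ((1#3)%Q, [Th;XiL;Et;Th], (P Th)); ((-1#1)%Q, [Th;XiL;Et;Xi], (P Xi)); ((2#3)%Q, [Th;XiL;XiL;Et], (P Xi)); ((1#3)%Q, [Et;Th;Et;Th], IdL); ((2#3)%Q, [Et;Th;XiL;Et], (P Et)); ((-1#3)%Q, [Et;Xi;Th;XiL], (P XiL))]);
  ([XiL;XiL;Et], (P Et), [((1#3)%Q, [Th;Et;Th;XiL], (P Th)); ((-1#3)%Q, [Th;XiL;Et;Th], (P Th)); ((-2#3)%Q, [Th;XiL;XiL;Et], (P Xi)); ((-1#3)%Q, [Et;Th;Et;Th], IdL); ((1#3)%Q, [Et;Th;XiL;Et], (P Et)); ((1#3)%Q, [Et;Xi;Th;XiL], (P XiL))]);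
  ([XiL;XiL;XiL], (P XiL), [((-1#3)%Q, [Th;Et;Th;XiL], (P Th)); ((1#3)%Q, [Th;XiL;Et;Th], (P Th)); ((-1#3)%Q, [Th;XiL;XiL;Et], (P Xi)); ((1#3)%Q, [Et;Th;Et;Th], IdL); ((-1#3)%Q, [Et;Th;XiL;Et], (P Et)); ((1#1)%Q, [Et;Th;XiL;XiL], (P XiL)); ((-1#3)%Q, [Et;Xi;Th;XiL], (P XiL))])].

Fixpoint find_entry {A} (d : A) (l : list (list pl * bb * A)) (u : list pl) (c : bb) : A :=
  match l with
  | [] => d
  | (u', c', x) :: l => if (word_eqb u u' && bb_eqb c c')%bool then x else find_entry d l u c
  end.

Definition combo (l : list (Q * list pl * bb)) (T : trie) : sc :=
  fold_right (fun e acc => let '(q, w, c) := e in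
     sadd (if (composable w && Nat.eqb (length w) 4)%bool
           then smul (sconst q) (sget (lookup T w) c) else szero) acc)
   szero l.

Lemma combo_zero env l T :
  (forall w c, composable w = true -> length w = 4%nat -> sden env (sget (lookup T w) c) = C0) ->
  sden env (combo l T) = C0.
Proof.
  intro H. induction l as [|[[q w] c] l IH]. exact (sden_zero _).
  unfold combo; cbn [fold_right]; fold (combo l T). rewrite sden_add, IH.
  destruct (composable w && Nat.eqb (length w) 4)%bool eqn:E.
  - apply andb_prop in E. destruct E as [E1 E2]. apply Nat.eqb_eq in E2.
    rewrite sden_mul, H by auto. ring.
  - rewrite sden_zero. ring.
Qed.

Definition chk_f3 (T4 : trie) : bool :=
  all_composable (fun u => forallb (fun c => if allowedb (-2) u c
        then seqb (ssub (sget (sf3gen u) c) (sget (sf3p u) c)) (combo (find_entry [] certs u c) T4)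
        else siszero (sget (sf3p u) c)) bbs) 3 None.

Lemma chk_f3_holds : chk_f3 (nth 4 (tbl smP (sstrict3 sf3gen) 4) TE) = true.
Proof. vm_cast_no_check (eq_refl true). Qed.

Lemma f3_normal_form ti Sv f3 mpp : bimod f3 -> homog f3 (-2)%Z ->
  is_morphism (polishchuk ti Sv) (strict3 f3) mpp ->
  (forall w c, composable w = true -> length w = 4%nat -> mpp 4%nat w c = C0) ->
  forall u, composable u = true -> length u = 3%nat -> vden (mkenv ti Sv f3) (sf3p u) = f3 u.
Proof.
  intros Hb Hh Hmor H4 u Hc Hl. extensionality c.
  set (env := mkenv ti Sv f3). set (T4 := nth 4 (tbl smP (sstrict3 sf3gen) 4) TE).
  assert (HT4 : forall w c, composable w = true -> length w = 4%nat ->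
     sden env (sget (lookup T4 w) c) = C0).
  { intros w c' Hw Hlw. rewrite <- (H4 w c' Hw Hlw).
    exact (f_equal (fun v => v c') (transfer_table_ok ti Sv f3 sf3gen f3 mpp
             (fun u Hu Hlu => sf3gen_ok ti Sv f3 u Hb Hh Hu Hlu) Hmor 4 4 w
             ltac:(lia) ltac:(lia) Hw Hlw)). }
  pose proof chk_f3_holds as K. unfold chk_f3 in K.
  apply (all_composable_ok _ 3 u c) in K; [|exact Hl|exact Hc]. cbv beta in K.
  unfold vden. destruct (allowedb (-2) u c) eqn:E.
  - apply (sden_eqb env) in K. rewrite sden_sub, (combo_zero env _ _ HT4) in K.
    rewrite <- (Csub_eq0 _ _ K).
    exact (f_equal (fun v => v c) (sf3gen_ok ti Sv f3 u Hb Hh Hc Hl)).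
  - rewrite (sden_iszero env _ K). symmetry.
    apply (zero_outside f3 (-2)%Z u c Hb Hh Hc); [intros ->; discriminate | exact E].
Qed.

(** * Step 4: explicit coboundaries *)

(* coefficients of the witnesses: sums of monomials q t^k (product of atoms) *)
Inductive watom := g01 | lam | mu.
Definition watom_sc (a : watom) : sc :=
  match a with g01 => satom 2 | lam => slam | mu => smu end.
Definition mono_sc (m : Q * nat * list watom) : sc :=
  let '(q, k, l) := m in
  smul (sconst q) (smul (spow st k) (fold_right (fun a acc => smul (watom_sc a) acc) sone l)).
Definition poly_sc (l : list (Q * nat * list watom)) : sc :=
  fold_right (fun m acc => sadd (mono_sc m) acc) szero l.
Definition psif (data : list (list pl * bb * list (Q * nat * list watom))) (u : list pl) : sv :=
  smk (fun c => poly_sc (find_entry [] data u c)).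

(* psi_6 (a 5-cochain) and psi_8 (a 7-cochain); unlisted coefficients are 0 *)
Definition psi6_data : list (list pl * bb * list (Q * nat * list watom)) := [
  ([Th;Et;Xi;Xi;Xi], IdO, [((1#1)%Q, 0%nat, [lam;lam]); ((2#1)%Q, 2%nat, [g01;lam])]);
  ([Th;XiL;Et;Xi;Xi], IdO, [((-1#1)%Q, 2%nat, [g01;lam])]);
  ([Th;XiL;XiL;XiL;XiL], (P Th), [((-1#1)%Q, 0%nat, [mu;mu]); ((-2#1)%Q, 2%nat, [g01;mu])]);
  ([Et;Th;XiL;XiL;XiL], IdL, [((1#1)%Q, 0%nat, [mu;mu]); ((2#1)%Q, 2%nat, [g01;mu])]);
  ([Et;Xi;Th;XiL;XiL], IdL, [((-1#1)%Q, 2%nat, [g01;mu])]);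
  ([Et;Xi;Xi;Xi;Xi], (P Et), [((-1#1)%Q, 0%nat, [lam;lam]); ((-2#1)%Q, 2%nat, [g01;lam])]);
  ([Xi;Th;Et;Xi;Xi], IdO, [((-1#1)%Q, 0%nat, [lam;lam]); ((-2#1)%Q, 2%nat, [g01;lam])]);
  ([Xi;Th;XiL;XiL;XiL], (P Th), [((1#1)%Q, 2%nat, [g01;mu])]);
  ([Xi;Xi;Th;XiL;Et], IdO, [((1#1)%Q, 2%nat, [g01;lam])]);
  ([Xi;Xi;Th;XiL;XiL], (P Th), [((1#1)%Q, 0%nat, [lam;mu]); ((1#1)%Q, 2%nat, [g01;lam]); ((1#1)%Q, 2%nat, [g01;mu])]);
  ([Xi;Xi;Xi;Th;XiL], (P Th), [((-1#1)%Q, 2%nat, [g01;lam])]);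
  ([XiL;Et;Th;XiL;XiL], IdL, [((-1#1)%Q, 0%nat, [mu;mu]); ((-2#1)%Q, 2%nat, [g01;mu])]);
  ([XiL;Et;Xi;Xi;Xi], (P Et), [((1#1)%Q, 2%nat, [g01;lam])]);
  ([XiL;XiL;Et;Xi;Th], IdL, [((1#1)%Q, 2%nat, [g01;mu])]);
  ([XiL;XiL;Et;Xi;Xi], (P Et), [((1#1)%Q, 0%nat, [lam;mu]); ((1#1)%Q, 2%nat, [g01;lam]); ((1#1)%Q, 2%nat, [g01;mu])]);
  ([XiL;XiL;XiL;Et;Xi], (P Et), [((-1#1)%Q, 2%nat, [g01;mu])])].
Definition psi8_data : list (list pl * bb * list (Q * nat * list watom)) := [
  ([Th;XiL;Et;Xi;Xi;Xi;Xi], IdO, [((-2#1)%Q, 4%nat, [g01;g01;lam]); ((-1#1)%Q, 2%nat, [g01;lam;lam])]);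
  ([Th;XiL;XiL;Et;Xi;Xi;Xi], IdO, [((1#1)%Q, 4%nat, [g01;g01;lam])]);
  ([Et;Xi;Th;XiL;XiL;XiL;XiL], IdL, [((-1#1)%Q, 2%nat, [g01;mu;mu]); ((-2#1)%Q, 4%nat, [g01;g01;mu])]);
  ([Et;Xi;Xi;Th;XiL;XiL;XiL], IdL, [((1#1)%Q, 4%nat, [g01;g01;mu])]);
  ([Xi;Th;XiL;XiL;Et;Xi;Xi], IdO, [((1#1)%Q, 4%nat, [g01;g01;lam])]);
  ([Xi;Th;XiL;XiL;XiL;XiL;XiL], (P Th), [((1#1)%Q, 2%nat, [g01;mu;mu]); ((2#1)%Q, 4%nat, [g01;g01;mu])]);
  ([Xi;Xi;Th;Et;Xi;Xi;Xi], IdO, [((-3#1)%Q, 4%nat, [g01;g01;lam]); ((-1#1)%Q, 0%nat, [lam;lam;lam]); ((-3#1)%Q, 2%nat, [g01;lam;lam])]);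
  ([Xi;Xi;Th;XiL;Et;Xi;Xi], IdO, [((4#1)%Q, 4%nat, [g01;g01;lam]); ((2#1)%Q, 2%nat, [g01;lam;lam])]);
  ([Xi;Xi;Th;XiL;XiL;Et;Xi], IdO, [((-1#1)%Q, 4%nat, [g01;g01;lam])]);
  ([Xi;Xi;Th;XiL;XiL;XiL;XiL], (P Th), [((1#1)%Q, 2%nat, [g01;mu;mu]); ((1#1)%Q, 0%nat, [lam;mu;mu]); ((1#1)%Q, 4%nat, [g01;g01;mu]); ((1#1)%Q, 4%nat, [g01;g01;lam]); ((2#1)%Q, 2%nat, [g01;lam;mu])]);
  ([Xi;Xi;Xi;Th;Et;Xi;Xi], IdO, [((3#1)%Q, 4%nat, [g01;g01;lam]); ((1#1)%Q, 0%nat, [lam;lam;lam]); ((3#1)%Q, 2%nat, [g01;lam;lam])]);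
  ([Xi;Xi;Xi;Th;XiL;XiL;Et], IdO, [((-1#1)%Q, 4%nat, [g01;g01;lam])]);
  ([Xi;Xi;Xi;Th;XiL;XiL;XiL], (P Th), [((-2#1)%Q, 4%nat, [g01;g01;mu]); ((-2#1)%Q, 4%nat, [g01;g01;lam]); ((-2#1)%Q, 2%nat, [g01;lam;mu])]);
  ([Xi;Xi;Xi;Xi;Th;XiL;Et], IdO, [((-2#1)%Q, 4%nat, [g01;g01;lam]); ((-1#1)%Q, 2%nat, [g01;lam;lam])]);
  ([Xi;Xi;Xi;Xi;Th;XiL;XiL], (P Th), [((-1#1)%Q, 0%nat, [lam;lam;mu]); ((-1#1)%Q, 4%nat, [g01;g01;mu]); ((-1#1)%Q, 4%nat, [g01;g01;lam]); ((-1#1)%Q, 2%nat, [g01;lam;lam]); ((-2#1)%Q, 2%nat, [g01;lam;mu])]);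
  ([Xi;Xi;Xi;Xi;Xi;Th;XiL], (P Th), [((2#1)%Q, 4%nat, [g01;g01;lam]); ((1#1)%Q, 2%nat, [g01;lam;lam])]);
  ([XiL;Et;Xi;Xi;Th;XiL;XiL], IdL, [((1#1)%Q, 4%nat, [g01;g01;mu])]);
  ([XiL;Et;Xi;Xi;Xi;Xi;Xi], (P Et), [((2#1)%Q, 4%nat, [g01;g01;lam]); ((1#1)%Q, 2%nat, [g01;lam;lam])]);
  ([XiL;XiL;Et;Th;XiL;XiL;XiL], IdL, [((-1#1)%Q, 0%nat, [mu;mu;mu]); ((-3#1)%Q, 2%nat, [g01;mu;mu]); ((-3#1)%Q, 4%nat, [g01;g01;mu])]);
  ([XiL;XiL;Et;Xi;Th;XiL;XiL], IdL, [((2#1)%Q, 2%nat, [g01;mu;mu]); ((4#1)%Q, 4%nat, [g01;g01;mu])]);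
  ([XiL;XiL;Et;Xi;Xi;Th;XiL], IdL, [((-1#1)%Q, 4%nat, [g01;g01;mu])]);
  ([XiL;XiL;Et;Xi;Xi;Xi;Xi], (P Et), [((1#1)%Q, 0%nat, [lam;lam;mu]); ((1#1)%Q, 4%nat, [g01;g01;mu]); ((1#1)%Q, 4%nat, [g01;g01;lam]); ((1#1)%Q, 2%nat, [g01;lam;lam]); ((2#1)%Q, 2%nat, [g01;lam;mu])]);
  ([XiL;XiL;XiL;Et;Th;XiL;XiL], IdL, [((1#1)%Q, 0%nat, [mu;mu;mu]); ((3#1)%Q, 2%nat, [g01;mu;mu]); ((3#1)%Q, 4%nat, [g01;g01;mu])]);
  ([XiL;XiL;XiL;Et;Xi;Xi;Th], IdL, [((-1#1)%Q, 4%nat, [g01;g01;mu])]);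
  ([XiL;XiL;XiL;Et;Xi;Xi;Xi], (P Et), [((-2#1)%Q, 4%nat, [g01;g01;mu]); ((-2#1)%Q, 4%nat, [g01;g01;lam]); ((-2#1)%Q, 2%nat, [g01;lam;mu])]);
  ([XiL;XiL;XiL;XiL;Et;Xi;Th], IdL, [((-1#1)%Q, 2%nat, [g01;mu;mu]); ((-2#1)%Q, 4%nat, [g01;g01;mu])]);
  ([XiL;XiL;XiL;XiL;Et;Xi;Xi], (P Et), [((-1#1)%Q, 2%nat, [g01;mu;mu]); ((-1#1)%Q, 0%nat, [lam;mu;mu]); ((-1#1)%Q, 4%nat, [g01;g01;mu]); ((-1#1)%Q, 4%nat, [g01;g01;lam]); ((-2#1)%Q, 2%nat, [g01;lam;mu])]);
  ([XiL;XiL;XiL;XiL;XiL;Et;Xi], (P Et), [((1#1)%Q, 2%nat, [g01;mu;mu]); ((2#1)%Q, 4%nat, [g01;g01;mu])])].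

Definition chk_psi (f : list pl -> sv) (d : nat) (D : Z) : bool :=
  all_composable (fun u => forallb (fun c => (siszero (sget (f u) c) || allowedb D u c)%bool) bbs)
    d None.
Definition chk_cob (N : nat) (A B : list trie) (psi : trie) : bool :=
  all_composable (fun w => forallb (fun c =>
    seqb (ssub (sget (lookup (nth N A TE) w) c) (sget (lookup (nth N B TE) w) c))
         (sget (shoch (lookup psi) w) c)) bbs) N None.

Lemma coboundary_from_checks env (mp mpp : nat -> cochain) (A B : list trie) (N : nat)
  (data : list (list pl * bb * list (Q * nat * list watom))) :
  (3 <= N)%nat ->
  (forall u, composable u = true -> length u = N -> vden env (lookup (nth N A TE) u) = mp N u) ->
  (forall u, composable u = true -> length u = N -> vden env (lookup (nth N B TE) u) = mpp N u) ->
  chk_psi (psif data) (N - 1) (2 - Z.of_nat N)%Z = true ->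
  chk_cob N A B (mk_trie (psif data) (N - 1) None) = true ->
  coboundary N (fun w c => Csub (mp N w c) (mpp N w c)).
Proof.
  intros HN HA HB Hpsi Hcob. set (T := mk_trie (psif data) (N - 1) None).
  exists (fun u => vden env (lookup T u)).
  assert (Supp : forall u c, vden env (lookup T u) c <> C0 ->
     length u = (N - 1)%nat /\ allowedb (2 - Z.of_nat N)%Z u c = true).
  { intros u c Hne. unfold T in Hne. rewrite lookup_mk, cf_none in Hne.
    destruct (Nat.eqb (length u) (N - 1) && composable u)%bool eqn:E;
      [|rewrite vden_zero in Hne; contradiction].
    apply andb_prop in E; destruct E as [E1 E2]. apply Nat.eqb_eq in E1.
    pose proof (all_composable_ok _ _ u c Hpsi E1 E2) as K. cbv beta in K.
    apply orb_prop in K. destruct K as [K|K]; [|auto].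
    exfalso. apply Hne. apply sden_iszero; auto. }
  split; [|split].
  - intros x w c Hc Hne. destruct (Supp _ _ Hne) as [_ K].
    destruct (allowed_sound _ _ _ _ K) as [? [? ?]]; auto.
  - intros w c Hc Hne. destruct (Supp _ _ Hne) as [E1 K].
    destruct w as [|x w]; [simpl in E1; lia|].
    destruct (allowed_sound _ _ _ _ K) as [? [? ?]]; auto.
  - intros w c Hc Hl. rewrite <- HA, <- HB by auto.
    pose proof (all_composable_ok _ N w c Hcob Hl Hc) as K. cbv beta in K.
    apply (sden_eqb env) in K. rewrite sden_sub in K. unfold vden. rewrite K.
    exact (shoch_ok env _ _ w (fun u => eq_refl) c).
Qed.

Definition tblA (N : nat) : list trie := tbl smP (sstrict3 sf3ctx) N.
Definition tblB (N : nat) : list trie := tbl smP (sstrict3 sf3p) N.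

Lemma psi6_bimod : chk_psi (psif psi6_data) 5 (-4) = true.
Proof. vm_cast_no_check (eq_refl true). Qed.
Lemma psi8_bimod : chk_psi (psif psi8_data) 7 (-6) = true.
Proof. vm_cast_no_check (eq_refl true). Qed.
Lemma psi6_cob : chk_cob 6 (tblA 6) (tblB 6) (mk_trie (psif psi6_data) 5 None) = true.
Proof. vm_cast_no_check (eq_refl true). Qed.
Lemma psi8_cob : chk_cob 8 (tblA 8) (tblB 8) (mk_trie (psif psi8_data) 7 None) = true.
Proof. vm_cast_no_check (eq_refl true). Qed.

Theorem mainTheorem15
  (tr ti : R) (hti : 0 < ti)
  (S : nat -> nat -> Cx)
  (hS : forall m n : nat, is_lattice_sum tr ti m n (S m n))
  (* m' = f * m for the specific f of the context *)
  (mp : nat -> cochain)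
  (hmp : is_morphism (polishchuk ti S) (strict3 (f3ctx ti S)) mp)
  (* an arbitrary strict isomorphism f' = (id, 0, f'_3, 0, ...) *)
  (f3' : cochain) (hf3b : bimod f3') (hf3d : homog f3' (-2)%Z)
  (* m'' = f' * m *)
  (mpp : nat -> cochain)
  (hmpp : is_morphism (polishchuk ti S) (strict3 f3') mpp)
  (h4 : forall w c, composable w = true -> length w = 4%nat -> mpp 4%nat w c = C0)
  (hodd : forall (k : nat) w c, (1 <= k)%nat -> composable w = true ->
            length w = (2 * k + 1)%nat -> mpp (2 * k + 1)%nat w c = C0) :
  coboundary 6 (fun w c => Csub (mp 6%nat w c) (mpp 6%nat w c)) /\
  coboundary 8 (fun w c => Csub (mp 8%nat w c) (mpp 8%nat w c)).
Proof.
  set (env := mkenv ti S f3').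
  assert (HA : forall N u, (3 <= N <= 8)%nat -> composable u = true -> length u = N ->
             vden env (lookup (nth N (tblA N) TE) u) = mp N u).
  { intros N u HN Hc Hl. apply (transfer_table_ok ti S f3' sf3ctx (f3ctx ti S)); auto; try lia.
    intros v _ _. apply sf3ctx_ok. }
  assert (HB : forall N u, (3 <= N <= 8)%nat -> composable u = true -> length u = N ->
             vden env (lookup (nth N (tblB N) TE) u) = mpp N u).
  { intros N u HN Hc Hl. apply (transfer_table_ok ti S f3' sf3p f3'); auto; try lia.
    exact (f3_normal_form ti S f3' mpp hf3b hf3d hmpp h4). }
  split.
  - apply (coboundary_from_checks env mp mpp (tblA 6) (tblB 6) 6 psi6_data).
    + lia.
    + exact (fun u => HA 6%nat u ltac:(lia)).
    + exact (fun u => HB 6%nat u ltac:(lia)).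
    + exact psi6_bimod.
    + exact psi6_cob.
  - apply (coboundary_from_checks env mp mpp (tblA 8) (tblB 8) 8 psi8_data).
    + lia.
    + exact (fun u => HA 8%nat u ltac:(lia)).
    + exact (fun u => HB 8%nat u ltac:(lia)).
    + exact psi8_bimod.
    + exact psi8_cob.
Qed.
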